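(* Let $(p_k)_{k\ge0}$, $(q_k)_{k\ge0}$ be increasing sequences of positive integers with $p_{2l}<q_{2l}<q_{2l+1}<p_{2l+1}<p_{2l+2}$ for all $l\ge0$, set $p_{-1}=q_{-1}=0$, let $(\epsilon_k)_{k\ge0}$ be a decreasing sequence of positive numbers tending to $0$, and let $\beta_k\to+\infty$. Suppose $$p_k^2e^{-\beta_k\epsilon_k}\to0,\quad q_k^2e^{-\beta_k\epsilon_k}\to0,\quad \beta_k\epsilon_{k+1}\to0,\quad \frac{q_{2l}}{p_{2l}}\to+\infty,\quad \frac{p_{2l+1}}{q_{2l+1}}\to+\infty,$$ and $\sum_{k\ge0}(p_k-p_{k-1})\epsilon_k<\infty$, $\sum_{k\ge0}(q_k-q_{k-1})\epsilon_k<\infty$. Let $H$ be the reduced double-well type potential with $H_n^0=\epsilon_k$ for $p_{k-1}<n\le p_k$ and $H_n^1=\epsilon_k$ for $q_{k-1}<n\le q_k$. Then its Gibbs measures satisfy $\mu_{\beta_{2l}}\to\delta_{0^\infty}$ and $\mu_{\beta_{2l+1}}\to\delta_{1^\infty}$ weak$^*$ as $l\to+\infty$.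
   Context: $\Sigma:=\{0,1\}^{\mathbb N}$. A reduced double-well type potential is a continuous nonnegative $H:\Sigma\to\mathbb R$ with summable variation such that $H=0$ on $[00]\cup[11]$, $H=H_n^0>0$ on $[01^n0]$, $H=H_n^1>0$ on $[10^n1]$ ($n\ge1$), and $\sum_{k\ge1}\sup_{n\ge0}|H_k^i-H_{k+n}^i|<\infty$ ($i=0,1$); such $H$ is determined by the sequences $(H_n^0),(H_n^1)$. Gibbs measure: $\mathcal L_\beta[\Phi](x)=e^{-\beta H(0x)}\Phi(0x)+e^{-\beta H(1x)}\Phi(1x)$; $\Phi_\beta$ its unique positive continuous eigenfunction with $\max\Phi_\beta=1$, eigenvalue $\lambda_\beta$; $\nu_\beta$ the unique probability with $\mathcal L_\beta^*\nu_\beta=\lambda_\beta\nu_\beta$; $\mu_\beta:=\Phi_\beta\nu_\beta/\int\Phi_\beta d\nu_\beta$. *)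

From Stdlib Require Import Reals Lra Lia.
Open Scope R_scope.

(* Sigma = {0,1}^N, with 0 = false, 1 = true. *)
Definition Sigma := nat -> bool.

Definition scons (b : bool) (x : Sigma) : Sigma :=
  fun n => match n with O => b | S m => x m end.

Definition const_seq (b : bool) : Sigma := fun _ => b.

Definition continuous_Sigma (f : Sigma -> R) : Prop :=
  forall (x : Sigma) (eps : R), 0 < eps ->
    exists N : nat, forall y : Sigma,
      (forall i, (i < N)%nat -> y i = x i) -> Rabs (f y - f x) < eps.

Definition summable_variation (H : Sigma -> R) : Prop :=
  exists v : nat -> R, (forall n, 0 <= v n) /\
    (exists l, infinite_sum v l) /\
    forall (n : nat) (x y : Sigma),
      (forall i, (i < n)%nat -> x i = y i) -> Rabs (H x - H y) <= v n.

Definition in_cyl_abna (a : bool) (n : nat) (x : Sigma) : Prop :=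
  x O = a /\ (forall i, (1 <= i <= n)%nat -> x i = negb a) /\ x (S n) = a.

Definition summable_tail_oscillation (h : nat -> R) : Prop :=
  exists w : nat -> R, (forall k, 0 <= w k) /\
    (exists l, infinite_sum w l) /\
    forall k n : nat, (1 <= k)%nat -> Rabs (h k - h (k + n)%nat) <= w k.

Definition reduced_double_well (H : Sigma -> R) (H0 H1 : nat -> R) : Prop :=
  continuous_Sigma H /\
  (forall x, 0 <= H x) /\
  summable_variation H /\
  (forall x, x O = x 1%nat -> H x = 0) /\
  (forall n x, (1 <= n)%nat -> in_cyl_abna false n x -> H x = H0 n /\ 0 < H0 n) /\
  (forall n x, (1 <= n)%nat -> in_cyl_abna true n x -> H x = H1 n /\ 0 < H1 n) /\
  summable_tail_oscillation H0 /\
  summable_tail_oscillation H1.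

Definition transfer (H : Sigma -> R) (beta : R) (f : Sigma -> R) : Sigma -> R :=
  fun x => exp (- beta * H (scons false x)) * f (scons false x)
         + exp (- beta * H (scons true x)) * f (scons true x).

Definition is_eigenfunction (H : Sigma -> R) (beta lam : R) (Phi : Sigma -> R) : Prop :=
  continuous_Sigma Phi /\
  (forall x, 0 < Phi x) /\
  (forall x, Phi x <= 1) /\ (exists x, Phi x = 1) /\
  (forall x, transfer H beta Phi x = lam * Phi x).

(* Borel probability measures on the compact metric space Sigma, represented
   (Riesz) by their integration functionals on continuous functions:
   positive, linear, normalized. *)
Definition is_prob_functional (nu : (Sigma -> R) -> R) : Prop :=
  (forall f g, continuous_Sigma f -> continuous_Sigma g ->
     nu (fun x => f x + g x) = nu f + nu g) /\
  (forall (c : R) f, continuous_Sigma f -> nu (fun x => c * f x) = c * nu f) /\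
  (forall f, continuous_Sigma f -> (forall x, 0 <= f x) -> 0 <= nu f) /\
  nu (fun _ => 1) = 1.

Definition is_eigenmeasure (H : Sigma -> R) (beta lam : R) (nu : (Sigma -> R) -> R) : Prop :=
  is_prob_functional nu /\
  forall f, continuous_Sigma f -> nu (transfer H beta f) = lam * nu f.

Definition gibbs (Phi : Sigma -> R) (nu : (Sigma -> R) -> R) : (Sigma -> R) -> R :=
  fun f => nu (fun x => Phi x * f x) / nu Phi.

Definition weak_cv_dirac (mu : nat -> (Sigma -> R) -> R) (z : Sigma) : Prop :=
  forall f, continuous_Sigma f -> Un_cv (fun l => mu l f) (f z).

(* p_{k-1} with the convention p_{-1} = 0 *)
Definition prev (p : nat -> nat) (k : nat) : nat :=
  match k with O => O | S k' => p k' end.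

From Stdlib Require Import Reals Lra Lia Arith.
From Stdlib Require Import Classical ClassicalEpsilon FunctionalExtensionality Bool.
Open Scope R_scope.

(* The eigenfunction [Phi] of the transfer operator is constant on each cylinder
   [[c^s (negb c)]], and the ratio of its values on [[(negb c) c]] and [[c (negb c)]] is the
   geometric sum [sum_j lam^-j exp (-beta H^c_j)] over the energies of the wells of [c]; the
   eigenmeasure of [[c^(s+1) (negb c)]] is [lam^-s] times that of [[c (negb c)]]. At the
   temperature [beta_k] the wells of one symbol are suppressed up to length [p_k] (resp. [q_k])
   and nearly free beyond, so comparing the two geometric sums for the shorter and the much longer
   suppressed range shows that the Gibbs measure gives vanishing mass to the cylinder of the
   symbol with the longer range. A shift-invariant probability with vanishing mass on [[negb c]]
   converges weak-* to the Dirac mass at [c^oo]. *)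

Definition agree (N : nat) (x y : Sigma) : Prop := forall i, (i < N)%nat -> x i = y i.
Definition shift (x : Sigma) : Sigma := fun i => x (S i).
Definition shiftn (k : nat) (x : Sigma) : Sigma := fun i => x (k + i)%nat.

Lemma agree_sym N x y : agree N x y -> agree N y x.
Proof. intros H i Hi; symmetry; auto. Qed.

Lemma agree_trans N x y z : agree N x y -> agree N y z -> agree N x z.
Proof. intros H1 H2 i Hi; rewrite H1 by auto; auto. Qed.

Lemma agree_le N M x y : (M <= N)%nat -> agree N x y -> agree M x y.
Proof. intros Hle H i Hi; apply H; lia. Qed.

Lemma agree_scons N b x y : agree N x y -> agree (S N) (scons b x) (scons b y).
Proof. intros H [|i] Hi; simpl; auto. apply H; lia. Qed.

Lemma scons_shift (x : Sigma) : scons (x O) (shift x) = x.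
Proof. apply functional_extensionality; intros [|i]; reflexivity. Qed.

Lemma cont_local (N : nat) (f : Sigma -> R) :
  (forall x y, agree N x y -> f x = f y) -> continuous_Sigma f.
Proof.
  intros H x eps Heps. exists N. intros y Hy. rewrite (H y x Hy).
  unfold Rminus; rewrite Rplus_opp_r, Rabs_R0; auto.
Qed.

Lemma cont_const (c : R) : continuous_Sigma (fun _ => c).
Proof. apply (cont_local 0). auto. Qed.

Lemma cont_add f g :
  continuous_Sigma f -> continuous_Sigma g -> continuous_Sigma (fun x => f x + g x).
Proof.
  intros Hf Hg x eps Heps.
  destruct (Hf x (eps/2)) as [N1 H1]; [lra|].
  destruct (Hg x (eps/2)) as [N2 H2]; [lra|].
  exists (N1 + N2)%nat. intros y Hy.
  assert (A1 := H1 y (fun i Hi => Hy i ltac:(lia))).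
  assert (A2 := H2 y (fun i Hi => Hy i ltac:(lia))).
  replace (f y + g y - (f x + g x)) with ((f y - f x) + (g y - g x)) by ring.
  eapply Rle_lt_trans; [apply Rabs_triang|]. lra.
Qed.

Lemma cont_mul f g :
  continuous_Sigma f -> continuous_Sigma g -> continuous_Sigma (fun x => f x * g x).
Proof.
  intros Hf Hg x eps Heps.
  set (a := Rabs (f x)). set (b := Rabs (g x)).
  assert (Ha : 0 <= a) by apply Rabs_pos. assert (Hb : 0 <= b) by apply Rabs_pos.
  set (d := Rmin 1 ((eps/2) / (a + b + 1))).
  assert (Hd0 : 0 < d) by (apply Rmin_pos; [lra|]; apply Rdiv_lt_0_compat; lra).
  assert (Hd1 : d <= 1) by apply Rmin_l.
  assert (Hd2 : d * (a + b + 1) <= eps/2).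
  { assert (Hd := Rmin_r 1 ((eps/2) / (a + b + 1))). fold d in Hd.
    apply Rmult_le_compat_r with (r := a + b + 1) in Hd; [|lra].
    unfold Rdiv in Hd; rewrite Rmult_assoc, Rinv_l in Hd; lra. }
  destruct (Hf x d Hd0) as [N1 H1]. destruct (Hg x d Hd0) as [N2 H2].
  exists (N1 + N2)%nat. intros y Hy.
  assert (A1 := H1 y (fun i Hi => Hy i ltac:(lia))).
  assert (A2 := H2 y (fun i Hi => Hy i ltac:(lia))).
  replace (f y * g y - f x * g x)
    with ((f y - f x) * (g y - g x) + (f y - f x) * g x + f x * (g y - g x)) by ring.
  eapply Rle_lt_trans; [apply Rabs_triang|].
  eapply Rle_lt_trans; [apply Rplus_le_compat_r; apply Rabs_triang|].
  rewrite !Rabs_mult. fold a b.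
  assert (Rabs (f y - f x) * Rabs (g y - g x) <= d * d)
    by (apply Rmult_le_compat; try apply Rabs_pos; lra).
  assert (Rabs (f y - f x) * b <= d * b) by (apply Rmult_le_compat_r; lra).
  assert (a * Rabs (g y - g x) <= a * d) by (apply Rmult_le_compat_l; lra).
  nra.
Qed.

Lemma cont_scale (c : R) f : continuous_Sigma f -> continuous_Sigma (fun x => c * f x).
Proof. intros; apply (cont_mul (fun _ => c) f); auto using cont_const. Qed.

Lemma cont_sub f g :
  continuous_Sigma f -> continuous_Sigma g -> continuous_Sigma (fun x => f x - g x).
Proof.
  intros Hf Hg. replace (fun x => f x - g x) with (fun x => f x + (-1) * g x)
    by (apply functional_extensionality; intros; ring).
  apply cont_add, cont_scale; auto.
Qed.

Lemma cont_scons (b : bool) f : continuous_Sigma f -> continuous_Sigma (fun x => f (scons b x)).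
Proof.
  intros Hf x eps Heps. destruct (Hf (scons b x) eps Heps) as [N HN].
  exists N. intros y Hy. apply HN. intros [|i] Hi; simpl; auto. apply Hy; lia.
Qed.

Lemma cont_shiftn f k : continuous_Sigma f -> continuous_Sigma (fun x => f (shiftn k x)).
Proof.
  intros Hf x eps Heps. destruct (Hf (shiftn k x) eps Heps) as [N HN].
  exists (k + N)%nat. intros y Hy. apply HN. intros i Hi; unfold shiftn; apply Hy; lia.
Qed.

Lemma cont_shift f : continuous_Sigma f -> continuous_Sigma (fun x => f (shift x)).
Proof. apply (cont_shiftn f 1). Qed.

Lemma exp_le_1 x : x <= 0 -> exp x <= 1.
Proof.
  intros H. rewrite <- exp_0.
  destruct (Req_dec x 0); [subst; lra | left; apply exp_increasing; lra].
Qed.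

Lemma exp_lipschitz_nonpos a b : a <= 0 -> b <= 0 -> Rabs (exp a - exp b) <= Rabs (a - b).
Proof.
  assert (K : forall a b, a <= b -> b <= 0 -> exp b - exp a <= b - a).
  { intros a0 b0 H1 H2.
    assert (E : exp a0 = exp b0 * exp (a0 - b0)) by (rewrite <- exp_plus; f_equal; ring).
    rewrite E. generalize (exp_ineq1_le (a0 - b0)) (exp_pos b0).
    assert (exp b0 <= 1) by (apply exp_le_1; lra).
    assert (exp (a0 - b0) <= 1) by (apply exp_le_1; lra). nra. }
  intros Ha Hb. destruct (Rle_dec a b).
  - assert (exp a <= exp b)
      by (destruct (Req_dec a b); [subst; lra|left; apply exp_increasing; lra]).
    rewrite Rabs_left1, Rabs_left1 by lra. specialize (K a b r Hb). lra.
  - assert (exp b <= exp a) by (left; apply exp_increasing; lra).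
    rewrite Rabs_right, Rabs_right by lra. specialize (K b a ltac:(lra) Ha). lra.
Qed.

Lemma cont_exp_neg (beta : R) f : 0 <= beta -> (forall x, 0 <= f x) -> continuous_Sigma f ->
  continuous_Sigma (fun x => exp (- beta * f x)).
Proof.
  intros Hb Hpos Hf x eps Heps.
  destruct (Hf x (eps / (beta + 1))) as [N HN]. { apply Rdiv_lt_0_compat; lra. }
  exists N. intros y Hy. specialize (HN y Hy).
  eapply Rle_lt_trans.
  { apply exp_lipschitz_nonpos; [generalize (Hpos y); nra | generalize (Hpos x); nra]. }
  replace (- beta * f y - - beta * f x) with (beta * (f x - f y)) by ring.
  rewrite Rabs_mult, Rabs_right by lra. rewrite <- Rabs_Ropp, Ropp_minus_distr.
  assert (beta * Rabs (f y - f x) <= beta * (eps / (beta + 1))) by (apply Rmult_le_compat_l; lra).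
  assert (beta * (eps / (beta + 1)) < eps).
  { replace (beta * (eps / (beta + 1))) with (eps - eps / (beta + 1)) by (field; lra).
    assert (0 < eps / (beta + 1)) by (apply Rdiv_lt_0_compat; lra). lra. }
  lra.
Qed.

(** * Compactness of [Sigma] *)

Definition upd (z : Sigma) (n : nat) (b : bool) : Sigma :=
  fun i => if Nat.eqb i n then b else z i.

Section UniformContinuity.
Variables (f : Sigma -> R) (eps : R).

Definition bad_at (n : nat) (z : Sigma) : Prop :=
  forall N, exists x y, agree n x z /\ agree n y z /\ agree N x y /\ eps <= Rabs (f x - f y).

Lemma bad_at_S n z :
  bad_at n z -> bad_at (S n) (upd z n false) \/ bad_at (S n) (upd z n true).
Proof.
  intros Hb. apply NNPP. intros Hn. apply not_or_and in Hn. destruct Hn as [H0 H1].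
  apply not_all_ex_not in H0. apply not_all_ex_not in H1.
  destruct H0 as [N0 H0]. destruct H1 as [N1 H1].
  destruct (Hb (N0 + N1 + S n)%nat) as [x [y [Hx [Hy [Hxy He]]]]].
  assert (Exy : x n = y n) by (apply Hxy; lia).
  assert (G : forall b, x n = b -> agree (S n) x (upd z n b) /\ agree (S n) y (upd z n b)).
  { intros b Hb'. split; intros i Hi; unfold upd; destruct (Nat.eqb_spec i n).
    - subst; auto. - apply Hx; lia. - subst; congruence. - apply Hy; lia. }
  destruct (x n) eqn:E.
  - apply H1. exists x, y. destruct (G true eq_refl). repeat split; auto.
    intros i Hi; apply Hxy; lia.
  - apply H0. exists x, y. destruct (G false eq_refl). repeat split; auto.
    intros i Hi; apply Hxy; lia.
Qed.

Definition bad_step (n : nat) (z : Sigma) : Sigma :=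
  if excluded_middle_informative (bad_at (S n) (upd z n false))
  then upd z n false else upd z n true.

Fixpoint bad_path (n : nat) : Sigma :=
  match n with O => fun _ => false | S m => bad_step m (bad_path m) end.

Lemma bad_path_bad n : bad_at 0 (bad_path 0) -> bad_at n (bad_path n).
Proof.
  intros H0. induction n; auto. simpl. unfold bad_step.
  destruct (excluded_middle_informative _); auto.
  destruct (bad_at_S n (bad_path n) IHn); tauto.
Qed.

Lemma bad_path_stable n m i : (i < n)%nat -> bad_path (n + m) i = bad_path n i.
Proof.
  intros Hi. induction m. rewrite Nat.add_0_r; auto.
  rewrite Nat.add_succ_r. simpl. unfold bad_step.
  destruct (excluded_middle_informative _); unfold upd;
    destruct (Nat.eqb_spec i (n + m)); try lia; auto.
Qed.

Definition bad_limit : Sigma := fun i => bad_path (S i) i.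

Lemma bad_limit_agree n : agree n bad_limit (bad_path n).
Proof.
  intros i Hi. unfold bad_limit. replace n with (S i + (n - S i))%nat by lia.
  rewrite bad_path_stable; auto.
Qed.
End UniformContinuity.

(* A bad point at depth 0 would produce, by König's lemma, a point of discontinuity. *)
Lemma unif_cont f : continuous_Sigma f -> forall eps, 0 < eps ->
  exists N, forall x y, agree N x y -> Rabs (f x - f y) < eps.
Proof.
  intros Hf eps Heps. apply NNPP. intros Hn.
  assert (B0 : bad_at f eps 0 (bad_path f eps 0)).
  { intros N. apply NNPP. intros HN. apply Hn. exists N. intros x y Hxy.
    apply Rnot_le_lt. intros Hle. apply HN. exists x, y.
    repeat split; auto; intros i Hi; lia. }
  set (z := bad_limit f eps).
  destruct (Hf z (eps/2)) as [N HN]; [lra|].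
  destruct (bad_path_bad f eps N B0 N) as [x [y [Hx [Hy [_ He]]]]].
  assert (A1 := HN x (agree_trans _ _ _ _ Hx (agree_sym _ _ _ (bad_limit_agree f eps N)))).
  assert (A2 := HN y (agree_trans _ _ _ _ Hy (agree_sym _ _ _ (bad_limit_agree f eps N)))).
  replace (f x - f y) with ((f x - f z) + - (f y - f z)) in He by ring.
  generalize (Rabs_triang (f x - f z) (- (f y - f z))). rewrite Rabs_Ropp. lra.
Qed.

Lemma local_bounded N : forall g : Sigma -> R, (forall x y, agree N x y -> g x = g y) ->
  exists M, forall x, Rabs (g x) <= M.
Proof.
  induction N; intros g Hg.
  - exists (Rabs (g (fun _ => false))). intros x.
    rewrite (Hg x (fun _ => false)); [lra|]. intros i Hi; lia.
  - destruct (IHN (fun x => g (scons false x))) as [M0 H0].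
    { intros x y Hxy. apply Hg. apply agree_scons; auto. }
    destruct (IHN (fun x => g (scons true x))) as [M1 H1].
    { intros x y Hxy. apply Hg. apply agree_scons; auto. }
    exists (Rmax M0 M1). intros x. rewrite <- (scons_shift x).
    destruct (x O); [eapply Rle_trans; [apply H1|apply Rmax_r]
                   | eapply Rle_trans; [apply H0|apply Rmax_l]].
Qed.

Definition trunc (N : nat) (x : Sigma) : Sigma := fun i => if Nat.ltb i N then x i else false.

Lemma cont_bounded f : continuous_Sigma f -> exists M, forall x, Rabs (f x) <= M.
Proof.
  intros Hf. destruct (unif_cont f Hf 1 ltac:(lra)) as [N HN].
  destruct (local_bounded N (fun x => f (trunc N x))) as [M HM].
  { intros x y Hxy. f_equal. apply functional_extensionality. intros i. unfold trunc.
    destruct (Nat.ltb_spec i N); auto. }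
  exists (M + 1). intros x.
  assert (Rabs (f x - f (trunc N x)) < 1).
  { apply HN. intros i Hi. unfold trunc. destruct (Nat.ltb_spec i N); auto; lia. }
  specialize (HM x). simpl in HM.
  replace (f x) with ((f x - f (trunc N x)) + f (trunc N x)) by ring.
  generalize (Rabs_triang (f x - f (trunc N x)) (f (trunc N x))). lra.
Qed.

Fixpoint prepend (b : bool) (n : nat) (z : Sigma) : Sigma :=
  match n with O => z | S m => scons b (prepend b m z) end.

Fixpoint starts_run (c : bool) (n : nat) (x : Sigma) : bool :=
  match n with O => true | S m => Bool.eqb (x O) c && starts_run c m (shift x) end.

Definition b2R (b : bool) : R := if b then 1 else 0.

Definition ind_run (c : bool) (n : nat) (x : Sigma) : R := b2R (starts_run c n x).
Definition ind_block (c : bool) (n : nat) (x : Sigma) : R :=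
  b2R (starts_run c n x && Bool.eqb (x n) (negb c)).

Lemma starts_runP c n x : starts_run c n x = true <-> forall i, (i < n)%nat -> x i = c.
Proof.
  revert x; induction n; intros x; simpl.
  - split; auto; intros; lia.
  - rewrite Bool.andb_true_iff, IHn, Bool.eqb_true_iff. split.
    + intros [H1 H2] [|i] Hi; auto. apply (H2 i); lia.
    + intros H; split. apply H; lia. intros i Hi; apply (H (S i)); lia.
Qed.

Lemma starts_run_agree c n x y : agree n x y -> starts_run c n x = starts_run c n y.
Proof.
  intros H. apply eq_true_iff_eq. rewrite !starts_runP.
  split; intros Hr i Hi; [rewrite <- (H i Hi) | rewrite (H i Hi)]; auto.
Qed.

Lemma starts_run_S c n x : starts_run c (S n) x = starts_run c n x && Bool.eqb (x n) c.
Proof.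
  apply eq_true_iff_eq. rewrite Bool.andb_true_iff, Bool.eqb_true_iff, !starts_runP.
  split.
  - intros H; split; [intros i Hi|]; apply H; lia.
  - intros [H1 H2] i Hi. destruct (Nat.eq_dec i n) as [->|Hne]; auto. apply H1; lia.
Qed.

Lemma ind_run_split c n x : ind_run c n x = ind_block c n x + ind_run c (S n) x.
Proof.
  unfold ind_run, ind_block. rewrite starts_run_S.
  destruct (starts_run c n x); simpl; [|unfold b2R; lra].
  destruct c, (x n); simpl; unfold b2R; lra.
Qed.

Lemma cont_ind_run c n : continuous_Sigma (ind_run c n).
Proof.
  apply (cont_local n). intros x y H. unfold ind_run. rewrite (starts_run_agree c n x y H); auto.
Qed.

Lemma cont_ind_block c n : continuous_Sigma (ind_block c n).
Proof.
  apply (cont_local (S n)). intros x y H. unfold ind_block.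
  rewrite (starts_run_agree c n x y (agree_le (S n) n x y ltac:(lia) H)), (H n) by lia. auto.
Qed.

Lemma b2R_bounds b : 0 <= b2R b <= 1.
Proof. destruct b; unfold b2R; lra. Qed.

Lemma ind_run_bounds c n x : 0 <= ind_run c n x <= 1.
Proof. apply b2R_bounds. Qed.

Lemma ind_block_01 c n x : ind_block c n x = 0 \/ ind_block c n x = 1.
Proof. unfold ind_block, b2R. destruct (_ && _); auto. Qed.

Lemma prepend_lt b n z i : (i < n)%nat -> prepend b n z i = b.
Proof. revert i; induction n; intros [|i] Hi; simpl; try lia; auto. apply IHn; lia. Qed.

Lemma prepend_ge b n z i : prepend b n z (n + i)%nat = z i.
Proof. induction n; simpl; auto. Qed.

Lemma agree_prepend b n N y y' :
  agree N y y' -> agree (n + N) (prepend b n y) (prepend b n y').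
Proof.
  intros H i Hi. destruct (Nat.lt_ge_cases i n).
  - rewrite !prepend_lt; auto.
  - replace i with (n + (i - n))%nat by lia. rewrite !prepend_ge. apply H; lia.
Qed.

Lemma ind_block_prepend c n x :
  ind_block c n x = 1 -> x = prepend c n (scons (negb c) (shiftn (S n) x)).
Proof.
  unfold ind_block, b2R.
  destruct (starts_run c n x && Bool.eqb (x n) (negb c)) eqn:E; [|lra]. intros _.
  apply Bool.andb_true_iff in E. destruct E as [E1 E2].
  rewrite starts_runP in E1. apply eqb_prop in E2.
  apply functional_extensionality. intros i. destruct (Nat.lt_ge_cases i n).
  - rewrite prepend_lt; auto.
  - replace i with (n + (i - n))%nat by lia. rewrite prepend_ge.
    destruct (i - n)%nat eqn:E; simpl.
    + rewrite Nat.add_0_r. auto.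
    + unfold shiftn. f_equal. lia.
Qed.

Lemma ind_run_scons_neq c n b x : b <> c -> ind_run c (S n) (scons b x) = 0.
Proof. intros H. unfold ind_run, b2R. simpl. destruct b, c; simpl; congruence. Qed.

Lemma ind_block_scons_neq c n b x : b <> c -> ind_block c (S n) (scons b x) = 0.
Proof. intros H. unfold ind_block, b2R. simpl. destruct b, c; simpl; congruence. Qed.

Lemma ind_run_scons_eq c n x : ind_run c (S n) (scons c x) = ind_run c n x.
Proof. unfold ind_run. simpl. rewrite Bool.eqb_reflx. reflexivity. Qed.

Lemma ind_block_scons_eq c n x : ind_block c (S n) (scons c x) = ind_block c n x.
Proof. unfold ind_block. simpl. rewrite Bool.eqb_reflx. reflexivity. Qed.

Lemma ind_block_head c s x : ind_block c (S s) x <> 0 -> x O = c.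
Proof. unfold ind_block, b2R. simpl. destruct (x O), c; simpl; auto; intros H; exfalso; auto. Qed.

Fixpoint psum (f : nat -> R) (n : nat) : R := match n with O => 0 | S m => psum f m + f m end.

Lemma psum_le f g n : (forall i, (i < n)%nat -> f i <= g i) -> psum f n <= psum g n.
Proof.
  induction n; simpl; intros H; [lra|].
  assert (f n <= g n) by (apply H; lia).
  assert (psum f n <= psum g n) by (apply IHn; intros; apply H; lia). lra.
Qed.

Lemma psum_nonneg f n : (forall i, 0 <= f i) -> 0 <= psum f n.
Proof. intros H; induction n; simpl; [lra|]. specialize (H n); lra. Qed.

Lemma psum_mono f n m : (forall i, 0 <= f i) -> (n <= m)%nat -> psum f n <= psum f m.
Proof. intros H Hnm. induction Hnm; [lra|]. simpl. specialize (H m); lra. Qed.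

Lemma psum_scal c f n : psum (fun i => c * f i) n = c * psum f n.
Proof. induction n; simpl; [ring|]. rewrite IHn; ring. Qed.

Lemma psum_ext f g n : (forall i, f i = g i) -> psum f n = psum g n.
Proof. intros H; induction n; simpl; auto. rewrite IHn, H; auto. Qed.

Lemma psum_le_const f n c : (forall i, f i <= c) -> psum f n <= INR n * c.
Proof. intros H; induction n; simpl psum; [simpl; lra|]. rewrite S_INR. specialize (H n). lra. Qed.

Lemma psum_const a n : psum (fun _ => a) n = INR n * a.
Proof. induction n; simpl psum; [simpl; ring|]. rewrite IHn, S_INR; ring. Qed.

Lemma psum_ge_term f n i : (forall j, 0 <= f j) -> (i < n)%nat -> f i <= psum f n.
Proof.
  intros Hf Hi. induction n; [lia|]. simpl. destruct (Nat.eq_dec i n).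
  - subst. generalize (psum_nonneg f n Hf). lra.
  - specialize (IHn ltac:(lia)). specialize (Hf n). lra.
Qed.

Lemma Rabs_psum_sub f g n : Rabs (psum f n - psum g n) <= psum (fun i => Rabs (f i - g i)) n.
Proof.
  induction n; simpl. { rewrite Rminus_0_r, Rabs_R0; lra. }
  replace (psum f n + f n - (psum g n + g n)) with ((psum f n - psum g n) + (f n - g n)) by ring.
  eapply Rle_trans; [apply Rabs_triang|]. lra.
Qed.

Lemma psum_by_parts (E : nat -> R) N :
  psum E N = psum (fun m => INR (S m) * (E m - E (S m))) N + INR N * E N.
Proof. induction N; cbn [psum]; [simpl; ring|]. rewrite IHN, !S_INR. ring. Qed.

Lemma cont_psum (g : nat -> Sigma -> R) n :
  (forall i, continuous_Sigma (g i)) -> continuous_Sigma (fun x => psum (fun i => g i x) n).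
Proof. intros Hg. induction n; simpl. apply cont_const. apply cont_add; auto. Qed.

Lemma pow_le_one x n : 0 <= x <= 1 -> x ^ n <= 1.
Proof. intros H. rewrite <- (pow1 n). apply pow_incr; lra. Qed.

Lemma pow_le_pow_of_le x n m : 0 <= x <= 1 -> (n <= m)%nat -> x ^ m <= x ^ n.
Proof.
  intros Hx Hnm. replace m with (n + (m - n))%nat by lia. rewrite pow_add.
  generalize (pow_le_one x (m - n) Hx) (pow_le x n ltac:(lra)). nra.
Qed.

Lemma Rabs_le_0 x : Rabs x <= 0 -> x = 0.
Proof. intros H. destruct (Req_dec x 0); auto. generalize (Rabs_no_R0 x H0) (Rabs_pos x). lra. Qed.

Lemma le_of_le_add_small x y (g : nat -> R) :
  (forall N, x <= y + g N) -> (forall e, 0 < e -> exists N, g N < e) -> x <= y.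
Proof.
  intros H Hg. apply Rnot_lt_le. intros Hlt.
  destruct (Hg (x - y)) as [N HN]; [lra|]. specialize (H N). lra.
Qed.

Lemma le_of_le_add_pow r x y C :
  0 <= r < 1 -> 0 <= C -> (forall N, x <= y + C * r ^ N) -> x <= y.
Proof.
  intros Hr HC H. apply (le_of_le_add_small x y (fun N => C * r ^ N) H).
  intros e He. destruct (Req_dec C 0) as [->|HC0].
  { exists O. lra. }
  destruct (pow_lt_1_zero r ltac:(rewrite Rabs_right; lra) (e / C)) as [N HN].
  { apply Rdiv_lt_0_compat; lra. }
  exists N. specialize (HN N (le_n N)).
  rewrite Rabs_right in HN by (apply Rle_ge, pow_le; lra).
  apply (Rmult_lt_compat_l C) in HN; [|lra].
  replace (C * (e / C)) with e in HN by (field; auto). exact HN.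
Qed.

Lemma eq_of_dist_le_pow r x y C :
  0 <= r < 1 -> 0 <= C -> (forall N, Rabs (x - y) <= C * r ^ N) -> x = y.
Proof.
  intros Hr HC H. apply Rminus_diag_uniq, Rabs_le_0.
  apply (le_of_le_add_pow r _ _ C Hr HC). intros N. rewrite Rplus_0_l. apply H.
Qed.

Lemma pow_ge_second_order h n :
  0 <= h -> 1 + INR n * h + INR n * (INR n - 1) / 2 * h ^ 2 <= (1 + h) ^ n.
Proof.
  intros Hh. induction n; [simpl; lra|].
  rewrite S_INR. simpl pow. simpl pow in IHn.
  assert (0 <= INR n) by apply pos_INR.
  assert (0 <= (1 + h) ^ n) by (apply pow_le; lra).
  destruct n as [|n]; [simpl; lra|].
  assert (0 <= INR (S n) * (INR (S n) - 1)) by (rewrite S_INR; generalize (pos_INR n); nra).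
  assert ((1 + INR (S n) * h + INR (S n) * (INR (S n) - 1) / 2 * (h * (h * 1))) * (1 + h)
            <= (1 + h) ^ S n * (1 + h)) by (apply Rmult_le_compat_r; lra).
  assert (0 <= INR (S n) * (INR (S n) - 1) * (h * (h * h))) by (apply Rmult_le_pos; nra).
  nra.
Qed.

Lemma nat_mul_pow_small r : 0 <= r < 1 ->
  forall e, 0 < e -> exists N, (1 <= N)%nat /\ INR N * r ^ N < e.
Proof.
  intros Hr e He. destruct (Req_dec r 0) as [E|E].
  { exists 1%nat. split; [lia|]. subst. simpl. lra. }
  set (h := / r - 1).
  assert (Hh : 0 < h).
  { unfold h. assert (1 < / r) by (rewrite <- Rinv_1; apply Rinv_lt_contravar; lra). lra. }
  assert (Heh : 0 < e * h ^ 2) by (apply Rmult_lt_0_compat; auto; apply pow_lt; auto).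
  destruct (INR_unbounded (2 / (e * h ^ 2) + 1)) as [N HN0].
  assert (HN : 2 / (e * h ^ 2) < INR N - 1) by lra.
  assert (H2 : 0 < 2 / (e * h ^ 2)) by (apply Rdiv_lt_0_compat; lra).
  exists N. split.
  { destruct N; [|lia]. change (INR 0) with 0 in HN0. lra. }
  assert (Hr1 : r = / (1 + h)) by (unfold h; rewrite Rplus_minus, Rinv_inv; auto).
  rewrite Hr1, pow_inv.
  assert (B := pow_ge_second_order h N (Rlt_le _ _ Hh)).
  assert (P : 0 < (1 + h) ^ N) by (apply pow_lt; lra).
  apply (Rmult_lt_reg_r ((1 + h) ^ N)); auto.
  rewrite Rmult_assoc, Rinv_l, Rmult_1_r by lra.
  assert (2 < e * h ^ 2 * (INR N - 1)).
  { apply (Rmult_lt_compat_l (e * h ^ 2)) in HN; auto.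
    replace (e * h ^ 2 * (2 / (e * h ^ 2))) with 2 in HN by (field; lra). lra. }
  assert (0 <= INR N) by apply pos_INR.
  assert (INR N * 1 < e * (INR N * (INR N - 1) / 2 * h ^ 2)) by nra.
  nra.
Qed.

Section GeometricTails.
Variable r : R.
Hypothesis Hr : 0 < r < 1.

(* [geom_tail m = sum_{j >= m} r^j] and [arith_geom_tail m = sum_{j >= m} j r^j]. *)
Definition geom_tail (m : nat) : R := r ^ m / (1 - r).
Definition arith_geom_tail (m : nat) : R := r ^ m * (INR m * (1 - r) + r) / (1 - r) ^ 2.

Lemma geom_tail_S m : geom_tail m - geom_tail (S m) = r ^ m.
Proof. unfold geom_tail. simpl. field. lra. Qed.

Lemma arith_geom_tail_S m : arith_geom_tail m - arith_geom_tail (S m) = INR m * r ^ m.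
Proof. unfold arith_geom_tail. rewrite S_INR. simpl. field. lra. Qed.

Lemma geom_tail_nonneg m : 0 <= geom_tail m.
Proof.
  unfold geom_tail. apply Rmult_le_pos; [apply pow_le; lra|].
  left; apply Rinv_0_lt_compat; lra.
Qed.

Lemma arith_geom_tail_pos m : 0 < arith_geom_tail m.
Proof.
  unfold arith_geom_tail. generalize (pos_INR m). intros.
  apply Rmult_lt_0_compat; [apply Rmult_lt_0_compat; [apply pow_lt|]; nra|].
  apply Rinv_0_lt_compat, pow_lt; lra.
Qed.

Lemma arith_geom_tail_decr m n : (m <= n)%nat -> arith_geom_tail n <= arith_geom_tail m.
Proof.
  intros H. induction H; [lra|].
  generalize (arith_geom_tail_S m0) (pos_INR m0) (pow_le r m0 ltac:(lra)). nra.
Qed.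

Lemma geom_tail_small e : 0 < e -> exists N, forall m, (N <= m)%nat -> geom_tail m < e.
Proof.
  intros He. destruct (pow_lt_1_zero r ltac:(rewrite Rabs_right; lra) (e * (1 - r))) as [N HN].
  { nra. }
  exists N. intros m Hm. specialize (HN m Hm). unfold geom_tail.
  rewrite Rabs_right in HN by (apply Rle_ge, pow_le; lra).
  apply (Rmult_lt_reg_r (1 - r)); [lra|].
  unfold Rdiv. rewrite Rmult_assoc, Rinv_l by lra. lra.
Qed.

Lemma arith_geom_tail_small e : 0 < e -> exists N, forall m, (N <= m)%nat -> arith_geom_tail m < e.
Proof.
  intros He. set (u := 1 - r).
  assert (Hu : 0 < u ^ 2) by (apply pow_lt; unfold u; lra).
  destruct (nat_mul_pow_small r ltac:(lra) (e * u ^ 2 / 2)) as [N [HN1 HN]]; [nra|].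
  exists N. intros m Hm. eapply Rle_lt_trans; [apply (arith_geom_tail_decr N m Hm)|].
  unfold arith_geom_tail. fold u.
  assert (r ^ N <= INR N * r ^ N).
  { rewrite <- (Rmult_1_l (r ^ N)) at 1. apply Rmult_le_compat_r; [apply pow_le; lra|].
    apply (le_INR 1); auto. }
  apply (Rmult_lt_reg_r (u ^ 2)); auto. unfold Rdiv. rewrite Rmult_assoc, Rinv_l by lra.
  assert (0 < u <= 1) by (unfold u; lra). assert (0 <= r ^ N) by (apply pow_le; lra).
  assert (r ^ N * (INR N * u + r) <= 2 * (INR N * r ^ N)).
  { assert (INR N * u <= INR N) by (generalize (pos_INR N); nra). nra. }
  nra.
Qed.

Lemma psum_geom_weight_le (w : nat -> R) d P :
  (forall t, (1 <= t <= P)%nat -> w t <= d) -> (forall t, (1 <= t)%nat -> 0 <= w t <= 1) ->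
  forall N, psum (fun j => r ^ (S j) * w (S j)) N
            <= d * INR (Nat.min N P) + (geom_tail (S P) - geom_tail (S (Nat.max N P))).
Proof.
  intros Hd Hw N. induction N.
  - simpl. replace (Nat.max 0 P) with P by lia. lra.
  - cbn [psum]. generalize (pow_le_one r (S N) ltac:(lra)) (pow_le r (S N) ltac:(lra)).
    intros. destruct (le_lt_dec (S N) P).
    + replace (Nat.min (S N) P) with (S (Nat.min N P)) by lia.
      replace (Nat.max (S N) P) with (Nat.max N P) by lia. rewrite S_INR.
      generalize (Hd (S N) ltac:(lia)) (Hw (S N) ltac:(lia)). nra.
    + replace (Nat.min (S N) P) with (Nat.min N P) by lia.
      replace (Nat.max (S N) P) with (S N) by lia. replace (Nat.max N P) with N in IHN by lia.
      generalize (geom_tail_S (S N)) (Hw (S N) ltac:(lia)). nra.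
Qed.

Lemma psum_geom_weight_ge (w : nat -> R) e P :
  0 <= e -> (forall t, (P < t)%nat -> e <= w t) -> (forall t, 0 <= w t) ->
  forall N, e * (geom_tail (S P) - geom_tail (S (Nat.max N P)))
            <= psum (fun j => r ^ (S j) * w (S j)) N.
Proof.
  intros He Hd Hw N. induction N.
  - simpl. replace (Nat.max 0 P) with P by lia. lra.
  - cbn [psum]. generalize (Hw (S N)) (pow_le r (S N) ltac:(lra)). intros.
    destruct (le_lt_dec (S N) P).
    + replace (Nat.max (S N) P) with (Nat.max N P) by lia. nra.
    + replace (Nat.max (S N) P) with (S N) by lia. replace (Nat.max N P) with N in IHN by lia.
      generalize (geom_tail_S (S N)) (Hd (S N) ltac:(lia)). nra.
Qed.

Lemma psum_arith_geom_weight_le (w : nat -> R) d P :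
  0 <= d -> (forall t, (1 <= t <= P)%nat -> w t <= d) -> (forall t, (1 <= t)%nat -> 0 <= w t <= 1) ->
  forall N, psum (fun m => INR (S m) * r ^ (S m) * w (S m)) N
            <= d * INR P * INR (Nat.min N P) + (arith_geom_tail (S P) - arith_geom_tail (S (Nat.max N P))).
Proof.
  intros Hd0 Hd Hw N. induction N.
  - simpl. replace (Nat.max 0 P) with P by lia. lra.
  - cbn [psum].
    generalize (Hw (S N) ltac:(lia)) (pow_le_one r (S N) ltac:(lra)) (pow_le r (S N) ltac:(lra))
      (pos_INR (S N)). intros.
    assert (0 <= INR (S N) * r ^ S N) by nra.
    destruct (le_lt_dec (S N) P).
    + replace (Nat.min (S N) P) with (S (Nat.min N P)) by lia.
      replace (Nat.max (S N) P) with (Nat.max N P) by lia. rewrite (S_INR (Nat.min N P)).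
      assert (INR (S N) <= INR P) by (apply le_INR; lia).
      assert (r ^ S N * w (S N) <= d) by (generalize (Hd (S N) ltac:(lia)); nra).
      assert (0 <= r ^ S N * w (S N)) by nra.
      assert (INR (S N) * r ^ S N * w (S N) <= d * INR P) by nra.
      lra.
    + replace (Nat.min (S N) P) with (Nat.min N P) by lia.
      replace (Nat.max (S N) P) with (S N) by lia. replace (Nat.max N P) with N in IHN by lia.
      generalize (arith_geom_tail_S (S N)). nra.
Qed.

Lemma psum_arith_geom_weight_ge (w : nat -> R) e P :
  0 <= e -> (forall t, (P < t)%nat -> e <= w t) -> (forall t, 0 <= w t) ->
  forall N, e * (arith_geom_tail (S P) - arith_geom_tail (S (Nat.max N P)))
            <= psum (fun m => INR (S m) * r ^ (S m) * w (S m)) N.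
Proof.
  intros He Hd Hw N. induction N.
  - simpl. replace (Nat.max 0 P) with P by lia. lra.
  - cbn [psum]. generalize (Hw (S N)) (pow_le r (S N) ltac:(lra)) (pos_INR (S N)). intros.
    assert (0 <= INR (S N) * r ^ S N) by nra.
    destruct (le_lt_dec (S N) P).
    + replace (Nat.max (S N) P) with (Nat.max N P) by lia. nra.
    + replace (Nat.max (S N) P) with (S N) by lia. replace (Nat.max N P) with N in IHN by lia.
      generalize (arith_geom_tail_S (S N)) (Hd (S N) ltac:(lia)). nra.
Qed.
End GeometricTails.

Lemma exp_pow x n : exp x ^ n = exp (INR n * x).
Proof.
  induction n; [simpl; rewrite Rmult_0_l, exp_0; auto|].
  rewrite S_INR. simpl. rewrite IHn, <- exp_plus. f_equal; ring.
Qed.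

Lemma exp_le_one_sub u : 0 <= u <= 1/2 -> exp (-2 * u) <= 1 - u.
Proof.
  intros Hu. generalize (exp_ineq1_le (2 * u)) (exp_pos (-2 * u)). intros.
  assert (exp (-2 * u) * exp (2 * u) = 1)
    by (rewrite <- exp_plus, <- exp_0; f_equal; ring).
  nra.
Qed.

Lemma exp_le_pow_one_sub u n : 0 <= u <= 1/2 -> exp (-2 * u * INR n) <= (1 - u) ^ n.
Proof.
  intros Hu. replace (-2 * u * INR n) with (INR n * (-2 * u)) by ring. rewrite <- exp_pow.
  apply pow_incr. split; [left; apply exp_pos | apply exp_le_one_sub; auto].
Qed.

Lemma pow2_lt_compat x y : 0 <= x < y -> x ^ 2 < y ^ 2.
Proof. intros H. nra. Qed.

(** * The two-well estimate *)

(* [A] and [B = 1/A] stand for the ratios of the eigenfunction on the two cylinders [[c (negb c)]]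
   and [[(negb c) c]]; they are squeezed between geometric tails starting at the lengths [P < Q]
   of the two low-energy wells. *)
Section TwoWell.
Variables (P Q : nat) (d e r A B W : R).
Hypothesis HPQ : (P < Q)%nat.
Hypothesis Hr : 1/2 <= r < 1.
Hypothesis Hd : 0 < d <= 1.
Hypothesis He : 1/2 <= e <= 1.
Hypothesis HA : 0 < A.
Hypothesis HB : 0 < B.
Hypothesis HAB : A * B = 1.
Hypothesis HA_ge : e * geom_tail r (S P) <= A.
Hypothesis HA_le : A <= d * INR P + geom_tail r (S P).
Hypothesis HB_ge : e * geom_tail r (S Q) <= B.
Hypothesis HB_le : B <= d * INR Q + geom_tail r (S Q).
Hypothesis HW : 1 <= W.
Hypothesis HWQ : W * exp (2 * W) < INR (S Q) * e.
Hypothesis Hsmall : d ^ 2 * INR Q ^ 2 + 2 * d * INR Q * INR (S Q) <= 1/2.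

Let u := 1 - r.
Let a := r ^ (S P).
Let b := r ^ (S Q).
Let p := INR (S P).
Let q := INR (S Q).

Lemma two_well_ranges : 0 < u <= 1/2 /\ 0 < a <= r /\ 0 < b <= r /\ 1 <= p /\ p <= q /\ 2 <= q.
Proof.
  unfold u, a, b, p, q. repeat split; try lra.
  - apply pow_lt; lra.
  - simpl. generalize (pow_le_one r P ltac:(lra)); nra.
  - apply pow_lt; lra.
  - simpl. generalize (pow_le_one r Q ltac:(lra)); nra.
  - rewrite S_INR; generalize (pos_INR P); lra.
  - apply le_INR; lia.
  - apply (le_INR 2); lia.
Qed.

Lemma two_well_ab_le : e ^ 2 * (a * b) <= u ^ 2.
Proof.
  destruct two_well_ranges as [[Hu0 Hu1] [[Ha0 Ha1] [[Hb0 Hb1] _]]].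
  unfold geom_tail in *. fold u a b in HA_ge, HB_ge.
  assert (E1 : e * a / u * (e * b / u) <= A * B).
  { assert (0 < / u) by (apply Rinv_0_lt_compat; lra).
    unfold Rdiv in *. apply Rmult_le_compat.
    all: try (apply Rmult_le_pos; [nra|lra]).
    all: rewrite Rmult_assoc; assumption. }
  rewrite HAB in E1.
  replace (e * a / u * (e * b / u)) with (e ^ 2 * (a * b) / u ^ 2) in E1 by (field; lra).
  apply (Rmult_le_reg_r (/ u ^ 2)); [apply Rinv_0_lt_compat, pow_lt; lra|].
  rewrite Rinv_r by (apply pow_nonzero; lra). exact E1.
Qed.

(* Were [q u < W], then [a b = (1 - u)^(p + q) >= exp (-4 W)] would contradict [HWQ]. *)
Lemma two_well_W_le : W <= q * u.
Proof.
  destruct two_well_ranges as [[Hu0 Hu1] [[Ha0 Ha1] [[Hb0 Hb1] [Hp1 [Hpq Hq2]]]]].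
  apply Rnot_lt_le. intros Hlt.
  assert (Eab : a * b = (1 - u) ^ (S P + S Q))
    by (unfold a, b, u; replace (1 - (1 - r)) with r by ring; symmetry; apply pow_add).
  assert (G1 := exp_le_pow_one_sub u (S P + S Q) ltac:(lra)).
  rewrite plus_INR in G1. fold p q in G1. rewrite <- Eab in G1.
  assert (G2 : exp (-4 * W) <= exp (-2 * u * (p + q))).
  { destruct (Req_dec (-4 * W) (-2 * u * (p + q))) as [->|]; [lra|].
    left. apply exp_increasing. nra. }
  assert (G3 := two_well_ab_le).
  assert (E4 : exp (4 * W) = exp (2 * W) * exp (2 * W))
    by (rewrite <- exp_plus; f_equal; ring).
  assert (E0 : exp (-4 * W) * exp (4 * W) = 1)
    by (rewrite <- exp_plus, <- exp_0; f_equal; ring).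
  generalize (exp_pos (2 * W)) (exp_pos (-4 * W)). intros.
  assert (Hqe : (W * exp (2 * W)) ^ 2 < (q * e) ^ 2) by (apply pow2_lt_compat; fold q in HWQ; nra).
  assert (K1 : (q * u) ^ 2 < W ^ 2) by (apply pow2_lt_compat; nra).
  assert (K2 : (q * e) ^ 2 * exp (-4 * W) <= (q * u) ^ 2).
  { replace ((q * e) ^ 2 * exp (-4 * W)) with (q ^ 2 * (e ^ 2 * exp (-4 * W))) by ring.
    replace ((q * u) ^ 2) with (q ^ 2 * u ^ 2) by ring.
    apply Rmult_le_compat_l; [nra|]. apply Rle_trans with (e ^ 2 * (a * b)); [|exact G3].
    apply Rmult_le_compat_l; [nra|lra]. }
  assert (K3 : (W * exp (2 * W)) ^ 2 * exp (-4 * W) = W ^ 2)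
    by (replace ((W * exp (2 * W)) ^ 2) with (W ^ 2 * exp (4 * W)) by (rewrite E4; ring);
        rewrite Rmult_assoc, Rmult_comm with (r1 := exp (4 * W)), E0; ring).
  assert ((W * exp (2 * W)) ^ 2 * exp (-4 * W) < (q * e) ^ 2 * exp (-4 * W))
    by (apply Rmult_lt_compat_r; auto).
  lra.
Qed.

Lemma two_well_u_le : u ^ 2 <= 2 * (a * b).
Proof.
  destruct two_well_ranges as [[Hu0 Hu1] [[Ha0 Ha1] [[Hb0 Hb1] [Hp1 [Hpq Hq2]]]]].
  assert (Hqu := two_well_W_le).
  unfold geom_tail in *. fold u a b in HA_ge, HA_le, HB_ge, HB_le.
  set (x := a / u) in *. set (y := b / u) in *.
  assert (Hx : x <= q).
  { unfold x. apply (Rmult_le_reg_r u); auto. unfold Rdiv. rewrite Rmult_assoc, Rinv_l by lra. nra. }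
  assert (Hy : y <= q).
  { unfold y. apply (Rmult_le_reg_r u); auto. unfold Rdiv. rewrite Rmult_assoc, Rinv_l by lra. nra. }
  assert (Hx0 : 0 <= x) by (unfold x; apply Rmult_le_pos; [lra|left; apply Rinv_0_lt_compat; lra]).
  assert (Hy0 : 0 <= y) by (unfold y; apply Rmult_le_pos; [lra|left; apply Rinv_0_lt_compat; lra]).
  assert (P1 : A * B <= (d * INR P + x) * (d * INR Q + y)) by (apply Rmult_le_compat; lra).
  rewrite HAB in P1.
  assert (HPQr : INR P <= INR Q) by (apply le_INR; lia).
  assert (HP0 : 0 <= INR P) by apply pos_INR.
  fold q in Hsmall.
  assert (d * INR P * y <= d * INR Q * q) by (apply Rmult_le_compat; try nra).
  assert (d * INR Q * x <= d * INR Q * q) by (apply Rmult_le_compat_l; nra).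
  assert (d * INR P * (d * INR Q) <= d ^ 2 * INR Q ^ 2).
  { assert (d * INR P <= d * INR Q) by (apply Rmult_le_compat_l; lra).
    assert (0 <= d * INR Q) by nra. simpl. nra. }
  assert (Hxy : 1/2 <= x * y) by nra.
  replace (x * y) with (a * b / u ^ 2) in Hxy by (unfold x, y; field; lra).
  assert (a * b / u ^ 2 * u ^ 2 = a * b) by (field; lra).
  assert (0 < u ^ 2) by (apply pow_lt; lra). nra.
Qed.

Let GP := arith_geom_tail r (S P).
Let GQ := arith_geom_tail r (S Q).
Let y := b / u.

Lemma two_well_GQ : 1/2 <= GQ /\ y ^ 2 <= GQ.
Proof.
  destruct two_well_ranges as [[Hu0 Hu1] [[Ha0 Ha1] [[Hb0 Hb1] [Hp1 [Hpq Hq2]]]]].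
  assert (Hqu := two_well_W_le). assert (HZ := two_well_u_le).
  assert (Hu2 : 0 < u ^ 2) by (apply pow_lt; lra).
  assert (EGQ : GQ = b * (q * u + r) / u ^ 2) by reflexivity.
  split.
  - assert (b * r <= b * (q * u + r)) by (apply Rmult_le_compat_l; nra).
    assert (a * b <= r * b) by (apply Rmult_le_compat_r; lra).
    rewrite EGQ. apply (Rmult_le_reg_r (u ^ 2)); auto.
    replace (b * (q * u + r) / u ^ 2 * u ^ 2) with (b * (q * u + r)) by (field; lra). nra.
  - rewrite EGQ. unfold y. replace ((b / u) ^ 2) with (b * b / u ^ 2) by (field; lra).
    unfold Rdiv. apply Rmult_le_compat_r; [left; apply Rinv_0_lt_compat; auto|].
    apply Rmult_le_compat_l; nra.
Qed.

Lemma two_well_B_sq : B ^ 2 <= 2 * (d ^ 2 * INR Q ^ 2) + 2 * y ^ 2.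
Proof.
  destruct two_well_ranges as [[Hu0 Hu1] [_ [[Hb0 Hb1] _]]].
  unfold geom_tail in HB_le. fold u b y in HB_le.
  assert (0 <= y) by (unfold y, Rdiv; apply Rmult_le_pos; [lra|left; apply Rinv_0_lt_compat; lra]).
  assert (0 <= INR Q) by apply pos_INR.
  assert (B ^ 2 <= (d * INR Q + y) ^ 2) by (simpl; apply Rmult_le_compat; nra).
  generalize (pow2_ge_0 (d * INR Q - y)). simpl in *. nra.
Qed.

Lemma two_well_y_GP : y ^ 2 * GP <= (1 / e ^ 2) * (p / q + 1 / W) * GQ.
Proof.
  destruct two_well_ranges as [[Hu0 Hu1] [[Ha0 Ha1] [[Hb0 Hb1] [Hp1 [Hpq Hq2]]]]].
  assert (Hqu := two_well_W_le). assert (HXY := two_well_ab_le).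
  assert (Hu2 : 0 < u ^ 2) by (apply pow_lt; lra).
  assert (He2 : 0 < e ^ 2) by (apply pow_lt; lra).
  assert (Hrho : p * u + r <= (p / q + 1 / W) * (q * u + r)).
  { assert (p / q * (q * u) = p * u) by (field; lra).
    assert (1 <= 1 / W * (q * u)).
    { unfold Rdiv. rewrite Rmult_1_l. apply (Rmult_le_reg_l W); [lra|].
      rewrite <- Rmult_assoc, Rinv_r by lra. lra. }
    assert (0 <= p / q + 1 / W)
      by (apply Rplus_le_le_0_compat; unfold Rdiv; apply Rmult_le_pos; try lra;
          left; apply Rinv_0_lt_compat; lra).
    nra. }
  replace (y ^ 2 * GP) with ((a * b / u ^ 2) * ((p * u + r) * (b / u ^ 2)))
    by (unfold y, GP, arith_geom_tail; fold u a p; field; lra).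
  replace ((1 / e ^ 2) * (p / q + 1 / W) * GQ)
    with ((1 / e ^ 2) * ((p / q + 1 / W) * (q * u + r) * (b / u ^ 2)))
    by (unfold GQ, arith_geom_tail; fold u b q; field; lra).
  assert (Hab : a * b / u ^ 2 <= 1 / e ^ 2).
  { apply (Rmult_le_reg_r (u ^ 2 * e ^ 2)); [nra|].
    replace (a * b / u ^ 2 * (u ^ 2 * e ^ 2)) with (e ^ 2 * (a * b)) by (field; lra).
    replace (1 / e ^ 2 * (u ^ 2 * e ^ 2)) with (u ^ 2) by (field; lra). lra. }
  assert (0 <= b / u ^ 2) by (unfold Rdiv; apply Rmult_le_pos; [lra|left; apply Rinv_0_lt_compat; auto]).
  apply Rmult_le_compat; auto.
  - unfold Rdiv; apply Rmult_le_pos; [nra|left; apply Rinv_0_lt_compat; auto].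
  - apply Rmult_le_pos; nra.
  - apply Rmult_le_compat_r; auto.
Qed.

Lemma two_well_GP_GQ : GP <= 4 * (p * q + q ^ 2) * GQ.
Proof.
  destruct two_well_ranges as [[Hu0 Hu1] [[Ha0 Ha1] [[Hb0 Hb1] [Hp1 [Hpq Hq2]]]]].
  assert (Hqu := two_well_W_le). assert (HZ := two_well_u_le).
  assert (Hu2 : 0 < u ^ 2) by (apply pow_lt; lra).
  unfold GP, GQ, arith_geom_tail. fold u a b p q. unfold Rdiv.
  replace (4 * (p * q + q ^ 2) * (b * (q * u + r) * / u ^ 2))
    with (4 * (p * q + q ^ 2) * (b * (q * u + r)) * / u ^ 2) by ring.
  apply Rmult_le_compat_r; [left; apply Rinv_0_lt_compat; auto|].
  assert (Hqu1 : 1 <= q * u) by lra.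
  assert (a * a * (p * u + r) <= (p * q + q ^ 2) * u ^ 2).
  { assert (a * a <= 1) by nra. assert (p * u + r <= p * u + 1) by lra.
    assert (0 <= p * u + r) by nra.
    assert (0 <= p * u * (q * u - 1)) by (apply Rmult_le_pos; nra).
    assert (p * u <= p * q * u ^ 2) by (simpl; nra).
    assert (1 <= (q * u) * (q * u)) by nra.
    assert (1 <= q ^ 2 * u ^ 2) by (simpl; nra). nra. }
  assert ((p * q + q ^ 2) * u ^ 2 <= (p * q + q ^ 2) * (2 * (a * b)))
    by (apply Rmult_le_compat_l; [nra|auto]).
  assert (b * r <= b * (q * u + r)) by (apply Rmult_le_compat_l; nra).
  assert (a * (a * (p * u + r)) <= a * (4 * (p * q + q ^ 2) * (b * (q * u + r)))).
  { assert (K0 : 0 <= p * q + q ^ 2) by nra.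
    assert (K1 : 0 <= a * (4 * (p * q + q ^ 2))) by nra.
    assert (K2 : b * (1/2) <= b * (q * u + r)) by nra.
    assert (a * (4 * (p * q + q ^ 2)) * (b * (1/2)) <= a * (4 * (p * q + q ^ 2)) * (b * (q * u + r)))
      by (apply Rmult_le_compat_l; auto).
    nra. }
  apply (Rmult_le_reg_l a); auto.
Qed.

Lemma two_well_bound :
  B ^ 2 * (d * INR P * INR P + GP) / (e * GQ) <=
  ((4 * d ^ 2 * INR Q ^ 2 + 2) * (d * INR P * INR P) + 8 * d ^ 2 * INR Q ^ 2 * (p * q + q ^ 2)
   + (2 / e ^ 2) * (p / q + 1 / W)) / e.
Proof.
  destruct two_well_GQ as [GQh Hy2].
  destruct two_well_ranges as [_ [_ [_ [_ [_ Hq2]]]]].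
  assert (HBsq := two_well_B_sq). assert (T2a := two_well_y_GP). assert (T2b := two_well_GP_GQ).
  assert (HP0 : 0 <= INR P) by apply pos_INR.
  assert (HQ2 : 0 <= d ^ 2 * INR Q ^ 2) by (simpl; nra).
  assert (0 <= d * INR P * INR P) by (apply Rmult_le_pos; [apply Rmult_le_pos|]; lra).
  assert (0 <= GP) by (left; apply arith_geom_tail_pos; lra).
  assert (Hnum : B ^ 2 * (d * INR P * INR P + GP) <=
    ((4 * d ^ 2 * INR Q ^ 2 + 2) * (d * INR P * INR P) + 8 * d ^ 2 * INR Q ^ 2 * (p * q + q ^ 2)
     + (2 / e ^ 2) * (p / q + 1 / W)) * GQ).
  { assert (B ^ 2 <= (4 * d ^ 2 * INR Q ^ 2 + 2) * GQ) by nra.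
    assert (B ^ 2 * (d * INR P * INR P) <= (4 * d ^ 2 * INR Q ^ 2 + 2) * GQ * (d * INR P * INR P))
      by (apply Rmult_le_compat_r; auto).
    assert (B ^ 2 * GP <= (2 * (d ^ 2 * INR Q ^ 2) + 2 * y ^ 2) * GP) by (apply Rmult_le_compat_r; auto).
    assert (2 * (d ^ 2 * INR Q ^ 2) * GP <= 2 * (d ^ 2 * INR Q ^ 2) * (4 * (p * q + q ^ 2) * GQ))
      by (apply Rmult_le_compat_l; lra).
    replace (2 / e ^ 2) with (2 * (1 / e ^ 2)) by (field; lra).
    nra. }
  assert (0 < e * GQ) by nra.
  apply (Rmult_le_reg_r (e * GQ)); auto.
  replace (B ^ 2 * (d * INR P * INR P + GP) / (e * GQ) * (e * GQ))
    with (B ^ 2 * (d * INR P * INR P + GP)) by (field; lra).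
  match goal with |- _ <= ?X / e * (e * GQ) => replace (X / e * (e * GQ)) with (X * GQ) by (field; lra) end.
  exact Hnum.
Qed.
End TwoWell.

Section ProbFunctional.
Variable mu : (Sigma -> R) -> R.
Hypothesis Hmu : is_prob_functional mu.

Lemma pf_ext f g : (forall x, f x = g x) -> mu f = mu g.
Proof. intros E. f_equal. apply functional_extensionality; auto. Qed.

Lemma pf_add f g : continuous_Sigma f -> continuous_Sigma g ->
  mu (fun x => f x + g x) = mu f + mu g.
Proof. apply Hmu. Qed.

Lemma pf_scale c f : continuous_Sigma f -> mu (fun x => c * f x) = c * mu f.
Proof. apply Hmu. Qed.

Lemma pf_nonneg f : continuous_Sigma f -> (forall x, 0 <= f x) -> 0 <= mu f.
Proof. apply Hmu. Qed.

Lemma pf_const c : mu (fun _ => c) = c.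
Proof.
  rewrite (pf_ext _ (fun _ => c * 1)) by (intros; ring).
  rewrite pf_scale by apply cont_const. destruct Hmu as [_ [_ [_ ->]]]. ring.
Qed.

Lemma pf_sub f g : continuous_Sigma f -> continuous_Sigma g ->
  mu (fun x => f x - g x) = mu f - mu g.
Proof.
  intros Hf Hg. rewrite (pf_ext _ (fun x => f x + (-1) * g x)) by (intros; ring).
  rewrite pf_add, pf_scale; auto; [ring|]. apply cont_scale; auto.
Qed.

Lemma pf_mono f g : continuous_Sigma f -> continuous_Sigma g ->
  (forall x, f x <= g x) -> mu f <= mu g.
Proof.
  intros Hf Hg Hle.
  assert (0 <= mu (fun x => g x - f x))
    by (apply pf_nonneg; [apply cont_sub; auto|intros x; specialize (Hle x); lra]).
  rewrite pf_sub in H; auto. lra.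
Qed.

Lemma pf_psum (g : nat -> Sigma -> R) n : (forall i, continuous_Sigma (g i)) ->
  mu (fun x => psum (fun i => g i x) n) = psum (fun i => mu (g i)) n.
Proof.
  intros Hg. induction n; simpl; [apply pf_const|].
  rewrite pf_add, IHn; auto. apply cont_psum; auto.
Qed.
End ProbFunctional.

Definition well {A : Type} (a0 a1 : A) (c : bool) : A := if c then a1 else a0.

Lemma transfer_first H beta f x e : transfer H beta f x =
  exp (- beta * H (scons e x)) * f (scons e x)
  + exp (- beta * H (scons (negb e) x)) * f (scons (negb e) x).
Proof. unfold transfer. destruct e; simpl; ring. Qed.

Section DoubleWell.
Variables (H : Sigma -> R) (H0 H1 : nat -> R).
Hypothesis RDW : reduced_double_well H H0 H1.

Lemma H_nonneg x : 0 <= H x.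
Proof. apply RDW. Qed.

Lemma H_diag x : x O = x 1%nat -> H x = 0.
Proof. apply RDW. Qed.

Lemma H_block c n y : (1 <= n)%nat ->
  H (scons c (prepend (negb c) n (scons c y))) = well H0 H1 c n /\ 0 < well H0 H1 c n.
Proof.
  intros Hn. destruct RDW as [_ [_ [_ [_ [R0 [R1 _]]]]]].
  assert (C : in_cyl_abna c n (scons c (prepend (negb c) n (scons c y)))).
  { split; [reflexivity|split].
    - intros i Hi. destruct i; [lia|]. simpl. apply prepend_lt; lia.
    - simpl. replace n with (n + 0)%nat at 2 by lia. rewrite prepend_ge. reflexivity. }
  destruct c; simpl; [apply R1|apply R0]; auto.
Qed.

Lemma H_bounded : exists M, forall x, H x <= M.
Proof.
  destruct (cont_bounded H ltac:(apply RDW)) as [M HM]. exists M.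
  intros x. generalize (HM x) (Rle_abs (H x)); lra.
Qed.

Lemma cont_exp_H_scons beta e : 0 <= beta ->
  continuous_Sigma (fun x => exp (- beta * H (scons e x))).
Proof.
  intros Hb. apply (cont_exp_neg beta (fun x => H (scons e x))); auto using H_nonneg.
  apply cont_scons, RDW.
Qed.

Lemma cont_transfer beta f : 0 <= beta -> continuous_Sigma f ->
  continuous_Sigma (transfer H beta f).
Proof.
  intros Hb Hf. unfold transfer.
  apply cont_add; apply cont_mul; try apply cont_exp_H_scons; try apply cont_scons; auto.
Qed.
End DoubleWell.

(** * The eigendata at a fixed temperature *)

Section Eigendata.
Variables (H : Sigma -> R) (H0 H1 : nat -> R) (beta lam : R).
Variables (Phi : Sigma -> R) (nu : (Sigma -> R) -> R).
Hypothesis RDW : reduced_double_well H H0 H1.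
Hypothesis EF : is_eigenfunction H beta lam Phi.
Hypothesis EM : is_eigenmeasure H beta lam nu.
Hypothesis Hb : 0 <= beta.

Definition r := / lam.
Definition block_weight (c : bool) (n : nat) : R := exp (- beta * well H0 H1 c n).

Let nu_pf : is_prob_functional nu := proj1 EM.

Lemma Phi_cont : continuous_Sigma Phi. Proof. apply EF. Qed.
Lemma Phi_pos x : 0 < Phi x. Proof. apply EF. Qed.
Lemma Phi_le_1 x : Phi x <= 1. Proof. apply EF. Qed.
Lemma Phi_eigen x : transfer H beta Phi x = lam * Phi x. Proof. apply EF. Qed.

Lemma Phi_dist_le_1 x y : Rabs (Phi x - Phi y) <= 1.
Proof. generalize (Phi_pos x) (Phi_pos y) (Phi_le_1 x) (Phi_le_1 y). intros. apply Rabs_le. lra. Qed.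

Lemma exp_H_le_1 e x : exp (- beta * H (scons e x)) <= 1.
Proof. apply exp_le_1. generalize (H_nonneg _ _ _ RDW (scons e x)). nra. Qed.

Lemma exp_H_diag e x : x O = e -> exp (- beta * H (scons e x)) = 1.
Proof.
  intros Hx. rewrite (H_diag _ _ _ RDW) by (simpl; auto).
  rewrite Rmult_0_r. apply exp_0.
Qed.

(* At [0^oo] the eigenvalue equation reads [lam Phi(0^oo) = Phi(0^oo) + (positive)]. *)
Lemma lam_gt_1 : 1 < lam.
Proof.
  set (z := fun _ : nat => false).
  assert (Ez : scons false z = z) by (apply functional_extensionality; intros [|i]; reflexivity).
  generalize (Phi_eigen z). unfold transfer. rewrite (exp_H_diag false z), Ez by reflexivity.
  generalize (exp_pos (- beta * H (scons true z))) (Phi_pos (scons true z)) (Phi_pos z). nra.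
Qed.

Lemma lam_le_2 : lam <= 2.
Proof.
  assert (E1 := proj2 EM (fun _ => 1) (cont_const 1)).
  rewrite (pf_const nu nu_pf) in E1.
  assert (Hle : nu (transfer H beta (fun _ => 1)) <= nu (fun _ => 2)).
  { apply (pf_mono nu nu_pf); [apply (cont_transfer _ _ _ RDW), cont_const; auto|apply cont_const|].
    intros x. unfold transfer. generalize (exp_H_le_1 false x) (exp_H_le_1 true x). lra. }
  rewrite (pf_const nu nu_pf) in Hle. lra.
Qed.

Lemma r_pos : 0 < r.
Proof. unfold r. apply Rinv_0_lt_compat. generalize lam_gt_1; lra. Qed.

Lemma r_range : 1/2 <= r < 1.
Proof.
  unfold r. generalize lam_gt_1 lam_le_2. intros. split.
  - replace (1/2) with (/ 2) by field. apply Rinv_le_contravar; lra.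
  - rewrite <- Rinv_1. apply Rinv_lt_contravar; lra.
Qed.

Lemma r_unit : 0 <= r < 1.
Proof. generalize r_pos r_range. lra. Qed.

Lemma Phi_fix x : Phi x = r * transfer H beta Phi x.
Proof. rewrite Phi_eigen. unfold r. generalize lam_gt_1; intros. field. lra. Qed.

Lemma nu_transfer f : continuous_Sigma f -> nu f = r * nu (transfer H beta f).
Proof.
  intros Hf. rewrite (proj2 EM) by auto. unfold r.
  generalize lam_gt_1; intros. field. lra.
Qed.

Lemma block_weight_pos c n : 0 < block_weight c n.
Proof. apply exp_pos. Qed.

Lemma block_weight_le_1 c n : (1 <= n)%nat -> block_weight c n <= 1.
Proof.
  intros Hn. apply exp_le_1. generalize (proj2 (H_block _ _ _ RDW c n (fun _ => false) Hn)). nra.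
Qed.

Lemma H_block_neg c n y : (1 <= n)%nat ->
  H (scons (negb c) (prepend c n (scons (negb c) y))) = well H0 H1 (negb c) n.
Proof.
  intros Hn. pose proof (H_block _ _ _ RDW (negb c) n y Hn) as [E _].
  rewrite negb_involutive in E. exact E.
Qed.


Lemma Phi_prepend_step c n y : (1 <= n)%nat ->
  Phi (prepend c n (scons (negb c) y)) =
  r * (block_weight (negb c) n * Phi (scons (negb c) (prepend c n (scons (negb c) y)))
       + Phi (prepend c (S n) (scons (negb c) y))).
Proof.
  intros Hn. rewrite Phi_fix at 1. rewrite (transfer_first _ _ _ _ (negb c)), negb_involutive.
  rewrite H_block_neg, exp_H_diag by (auto; apply prepend_lt; lia).
  unfold block_weight. simpl. ring.
Qed.

Lemma Phi_prepend_expand c s y J : (1 <= s)%nat ->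
  Phi (prepend c s (scons (negb c) y)) =
  psum (fun j => r ^ (S j) * block_weight (negb c) (s + j)
                 * Phi (scons (negb c) (prepend c (s + j) (scons (negb c) y)))) J
  + r ^ J * Phi (prepend c (s + J) (scons (negb c) y)).
Proof.
  intros Hs. induction J.
  - simpl. rewrite Nat.add_0_r. ring.
  - rewrite IHJ. simpl psum. rewrite (Phi_prepend_step c (s + J)) by lia.
    replace (s + S J)%nat with (S (s + J)) by lia. simpl. ring.
Qed.

Definition weight_sum (c : bool) (J : nat) : R := psum (fun j => r ^ (S j) * block_weight c (S j)) J.

Lemma weight_sum_nonneg c J : 0 <= weight_sum c J.
Proof.
  apply psum_nonneg. intros i.
  generalize (block_weight_pos c (S i)) (pow_le r (S i) (Rlt_le _ _ r_pos)). nra.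
Qed.

Lemma weight_sum_le c J : weight_sum c J <= INR J.
Proof.
  unfold weight_sum. rewrite <- (Rmult_1_r (INR J)). apply psum_le_const. intros i.
  generalize (block_weight_le_1 c (S i) ltac:(lia)) (block_weight_pos c (S i))
    (pow_le r (S i) (Rlt_le _ _ r_pos)) (pow_le_one r (S i) ltac:(generalize r_unit; lra)). nra.
Qed.

Lemma weight_sum_mono c I J : (I <= J)%nat -> weight_sum c I <= weight_sum c J.
Proof.
  intros; apply psum_mono; auto. intros i.
  generalize (block_weight_pos c (S i)) (pow_le r (S i) (Rlt_le _ _ r_pos)). nra.
Qed.


Lemma nu_ind_block_S c s : nu (ind_block c (S (S s))) = r * nu (ind_block c (S s)).
Proof.
  rewrite nu_transfer by apply cont_ind_block. f_equal. apply (pf_ext nu). intros x.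
  rewrite (transfer_first _ _ _ _ c), ind_block_scons_eq, ind_block_scons_neq
    by (destruct c; simpl; discriminate).
  destruct (Req_dec (ind_block c (S s) x) 0) as [E|E]; [rewrite E; ring|].
  rewrite exp_H_diag by (apply (ind_block_head c s x E)). ring.
Qed.

Lemma nu_ind_block c s : nu (ind_block c (S s)) = r ^ s * nu (ind_block c 1).
Proof. induction s; [simpl; ring|]. rewrite nu_ind_block_S, IHs. simpl; ring. Qed.

Lemma nu_ind_run_le c n : nu (ind_run c n) <= r ^ n.
Proof.
  induction n.
  - simpl. rewrite (pf_ext nu _ (fun _ => 1)) by reflexivity. rewrite (pf_const nu nu_pf); lra.
  - rewrite nu_transfer by apply cont_ind_run. simpl.
    assert (nu (transfer H beta (ind_run c (S n))) <= nu (ind_run c n)).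
    { apply (pf_mono nu nu_pf); [apply (cont_transfer _ _ _ RDW), cont_ind_run; auto|apply cont_ind_run|].
      intros x. rewrite (transfer_first _ _ _ _ c), ind_run_scons_eq, ind_run_scons_neq
        by (destruct c; simpl; discriminate).
      generalize (exp_H_le_1 c x) (exp_pos (- beta * H (scons c x))) (ind_run_bounds c n x). nra. }
    generalize r_pos; nra.
Qed.

(* [exit_fun c N] weighs the points whose first [N + 1] symbols are [negb c] by the cost of
   prepending [c]: its [nu]-mass relates the blocks [[c (negb c)]] and [[(negb c) c]]. *)
Definition exit_fun (c : bool) (N : nat) (x : Sigma) : R :=
  exp (- beta * H (scons c x)) * ind_run (negb c) (S N) x.

Lemma cont_exit_fun c N : continuous_Sigma (exit_fun c N).
Proof. apply cont_mul; [apply (cont_exp_H_scons _ _ _ RDW); auto|apply cont_ind_run]. Qed.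

Lemma exit_fun_nonneg c N x : 0 <= exit_fun c N x.
Proof.
  unfold exit_fun. generalize (exp_pos (- beta * H (scons c x))) (ind_run_bounds (negb c) (S N) x). nra.
Qed.

Lemma exit_fun_split c N x :
  exit_fun c N x = block_weight c (S N) * ind_block (negb c) (S N) x + exit_fun c (S N) x.
Proof.
  unfold exit_fun. rewrite (ind_run_split (negb c) (S N) x), Rmult_plus_distr_l. f_equal.
  destruct (ind_block_01 (negb c) (S N) x) as [E|E]; rewrite E; [ring|].
  rewrite (ind_block_prepend _ _ _ E), negb_involutive.
  rewrite (proj1 (H_block _ _ _ RDW c (S N) _ ltac:(lia))). unfold block_weight. ring.
Qed.

Lemma nu_exit_fun c N : nu (exit_fun c 0) =
  psum (fun s => block_weight c (S s) * (r ^ s * nu (ind_block (negb c) 1))) N + nu (exit_fun c N).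
Proof.
  induction N; [simpl; ring|].
  rewrite IHN. simpl psum. rewrite (pf_ext nu (exit_fun c N)) with (g := fun x =>
    block_weight c (S N) * ind_block (negb c) (S N) x + exit_fun c (S N) x) by apply exit_fun_split.
  rewrite (pf_add nu nu_pf), (pf_scale nu nu_pf), (nu_ind_block (negb c) N);
    try apply cont_ind_block; try apply cont_exit_fun; [ring|apply cont_scale, cont_ind_block].
Qed.

Lemma nu_ind_block_1 c : nu (ind_block c 1) = r * nu (exit_fun c 0).
Proof.
  rewrite nu_transfer by apply cont_ind_block. f_equal. apply (pf_ext nu). intros x.
  rewrite (transfer_first _ _ _ _ c), ind_block_scons_eq, ind_block_scons_neq
    by (destruct c; simpl; discriminate).
  unfold exit_fun. replace (ind_block c 0 x) with (ind_run (negb c) 1 x); [ring|].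
  unfold ind_block, ind_run, b2R; simpl; destruct (x O), c; reflexivity.
Qed.

Lemma nu_ind_block_1_ge c N :
  weight_sum c N * nu (ind_block (negb c) 1) <= nu (ind_block c 1).
Proof.
  rewrite (nu_ind_block_1 c), (nu_exit_fun c N).
  assert (0 <= nu (exit_fun c N))
    by (apply (pf_nonneg nu nu_pf); [apply cont_exit_fun|apply exit_fun_nonneg]).
  unfold weight_sum. rewrite Rmult_comm, <- psum_scal.
  replace (psum (fun i => nu (ind_block (negb c) 1) * (r ^ S i * block_weight c (S i))) N)
    with (r * psum (fun s => block_weight c (S s) * (r ^ s * nu (ind_block (negb c) 1))) N)
    by (rewrite <- psum_scal; apply psum_ext; intros; simpl; ring).
  generalize r_pos; nra.
Qed.

Lemma nu_ind_block_pos c : 0 < nu (ind_block c 1).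
Proof.
  destruct (H_bounded _ _ _ RDW) as [M HM].
  set (m := exp (- beta * M)). assert (Hm : 0 < m) by apply exp_pos.
  assert (Hwm : forall e x, m <= exp (- beta * H (scons e x))).
  { intros e x. unfold m. specialize (HM (scons e x)).
    destruct (Req_dec (- beta * M) (- beta * H (scons e x))) as [E|E]; [rewrite E; lra|].
    left. apply exp_increasing. nra. }
  assert (P1 : r * m <= nu (ind_run (negb c) 1)).
  { rewrite nu_transfer by apply cont_ind_run. apply Rmult_le_compat_l; [generalize r_pos; lra|].
    rewrite <- (pf_const nu nu_pf m).
    apply (pf_mono nu nu_pf); [apply cont_const|apply (cont_transfer _ _ _ RDW), cont_ind_run; auto|].
    intros x. rewrite (transfer_first _ _ _ _ (negb c)).
    rewrite (ind_run_scons_neq (negb c) 0 (negb (negb c)) x) by (destruct c; simpl; discriminate).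
    unfold ind_run, b2R. simpl. rewrite Bool.eqb_reflx. simpl. generalize (Hwm (negb c) x); lra. }
  rewrite nu_ind_block_1.
  assert (m * nu (ind_run (negb c) 1) <= nu (exit_fun c 0)).
  { rewrite <- (pf_scale nu nu_pf) by apply cont_ind_run.
    apply (pf_mono nu nu_pf); [apply cont_scale, cont_ind_run|apply cont_exit_fun|].
    intros x. unfold exit_fun. generalize (Hwm c x) (ind_run_bounds (negb c) 1 x). nra. }
  generalize r_pos; intros. assert (0 < r * m) by nra. nra.
Qed.

(* Chain [nu_ind_block_1_ge] through both wells. *)
Lemma weight_sum_mul_le_1 c I J : weight_sum c I * weight_sum (negb c) J <= 1.
Proof.
  set (M := (I + J)%nat).
  assert (A1 := nu_ind_block_1_ge c M). assert (A2 := nu_ind_block_1_ge (negb c) M).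
  rewrite negb_involutive in A2.
  assert (P1 := nu_ind_block_pos c). assert (P2 := nu_ind_block_pos (negb c)).
  assert (weight_sum c I <= weight_sum c M) by (apply weight_sum_mono; lia).
  assert (weight_sum (negb c) J <= weight_sum (negb c) M) by (apply weight_sum_mono; lia).
  generalize (weight_sum_nonneg c I) (weight_sum_nonneg (negb c) J)
    (weight_sum_nonneg c M) (weight_sum_nonneg (negb c) M). intros.
  assert (weight_sum c M * weight_sum (negb c) M * nu (ind_block c 1) <= nu (ind_block c 1)) by nra.
  assert (weight_sum c M * weight_sum (negb c) M <= 1)
    by (apply (Rmult_le_reg_r (nu (ind_block c 1))); auto; lra).
  nra.
Qed.


Definition osc_le (e : bool) (L : nat) (d : R) : Prop :=
  forall y y', agree L y y' ->
    Rabs (Phi (scons e (scons (negb e) y)) - Phi (scons e (scons (negb e) y'))) <= d.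

Lemma osc_le_expand e L d J : 0 <= d -> osc_le (negb e) (S L) d ->
  osc_le e L (weight_sum (negb e) J * d + r ^ J).
Proof.
  intros Hd HD y y' Hy.
  assert (P := Phi_prepend_expand e 1 y J ltac:(lia)).
  assert (P' := Phi_prepend_expand e 1 y' J ltac:(lia)).
  simpl prepend in P, P'. rewrite P, P'.
  match goal with |- Rabs (?a + ?b - (?c + ?d)) <= _ =>
    replace (a + b - (c + d)) with ((a - c) + (b - d)) by ring end.
  eapply Rle_trans; [apply Rabs_triang|]. apply Rplus_le_compat.
  - unfold weight_sum. rewrite Rmult_comm, <- psum_scal.
    eapply Rle_trans; [apply Rabs_psum_sub|]. apply psum_le. intros j Hj.
    set (w := r ^ S j * block_weight (negb e) (S j)).
    assert (Hw : 0 <= w)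
      by (unfold w; generalize (block_weight_pos (negb e) (S j)) (pow_le r (S j) (Rlt_le _ _ r_pos)); nra).
    assert (HDj := HD (prepend e j (scons (negb e) y)) (prepend e j (scons (negb e) y'))).
    rewrite negb_involutive in HDj. replace (1 + j)%nat with (S j) by lia. simpl prepend. fold w.
    rewrite <- Rmult_minus_distr_l, Rabs_mult, (Rabs_right w) by lra.
    rewrite Rmult_comm. apply Rmult_le_compat_r; auto. apply HDj.
    apply (agree_le (j + S L)); [lia|]. apply agree_prepend, agree_scons; auto.
  - rewrite <- Rmult_minus_distr_l, Rabs_mult, Rabs_right by (apply Rle_ge, pow_le; generalize r_pos; lra).
    match goal with |- _ * Rabs (Phi ?a - Phi ?b) <= _ => generalize (Phi_dist_le_1 a b) end.
    generalize (pow_le r J (Rlt_le _ _ r_pos)). nra.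
Qed.

(* Expanding twice, through [negb e] and back through [e], contracts the oscillation since
   [weight_sum_mul_le_1]. *)
Lemma osc_le_step e L eps : 0 <= eps -> osc_le e (S (S L)) eps -> osc_le e L eps.
Proof.
  intros He HD y y' Hy.
  apply (le_of_le_add_pow r _ _ 1 r_unit ltac:(lra)). intros J.
  apply (le_of_le_add_pow r _ _ (INR J) r_unit (pos_INR J)). intros I.
  assert (D1 : osc_le (negb e) (S L) (weight_sum e I * eps + r ^ I)).
  { generalize (osc_le_expand (negb e) (S L) eps I He). rewrite !negb_involutive. auto. }
  assert (D2 := osc_le_expand e L (weight_sum e I * eps + r ^ I) J
    ltac:(generalize (weight_sum_nonneg e I) (pow_le r I (Rlt_le _ _ r_pos)); nra) D1 y y' Hy).
  assert (weight_sum (negb e) J * weight_sum e I <= 1)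
    by (rewrite Rmult_comm; apply weight_sum_mul_le_1).
  generalize (weight_sum_le (negb e) J) (weight_sum_nonneg (negb e) J)
    (pow_le r I (Rlt_le _ _ r_pos)). nra.
Qed.

Lemma Phi_cyl_const e y y' : Phi (scons e (scons (negb e) y)) = Phi (scons e (scons (negb e) y')).
Proof.
  apply Rminus_diag_uniq, Rabs_le_0, Rle_plus_epsilon. intros eps He. rewrite Rplus_0_l.
  destruct (unif_cont Phi Phi_cont eps He) as [N HN].
  assert (G : forall k L, (N <= L + k)%nat -> osc_le e L eps).
  { induction k; intros L HL.
    - intros z z' Hz. left. apply HN. apply (agree_le (S (S L))); [lia|].
      apply agree_scons, agree_scons; auto.
    - apply osc_le_step; [lra|]. apply IHk. lia. }
  apply (G N O ltac:(lia)). intros i Hi; lia.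
Qed.

Definition zero : Sigma := fun _ => false.
Definition phi (e : bool) : R := Phi (scons e (scons (negb e) zero)).
Definition Phi_run (c : bool) (s : nat) : R := Phi (prepend c s (scons (negb c) zero)).

Lemma phi_pos e : 0 < phi e. Proof. apply Phi_pos. Qed.

Lemma Phi_cyl e y : Phi (scons e (scons (negb e) y)) = phi e.
Proof. apply Phi_cyl_const. Qed.

Lemma Phi_prepend_expand_phi c s y J : (1 <= s)%nat ->
  Phi (prepend c s (scons (negb c) y)) =
  phi (negb c) * psum (fun j => r ^ (S j) * block_weight (negb c) (s + j)) J
  + r ^ J * Phi (prepend c (s + J) (scons (negb c) y)).
Proof.
  intros Hs. rewrite (Phi_prepend_expand c s y J) by auto. f_equal.
  rewrite <- psum_scal. apply psum_ext. intros j.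
  destruct (s + j)%nat eqn:E; [lia|]. simpl prepend.
  rewrite <- (Phi_cyl (negb c) (prepend c n (scons (negb c) y))), negb_involutive. ring.
Qed.

Lemma Phi_prepend_run c s y : (1 <= s)%nat -> Phi (prepend c s (scons (negb c) y)) = Phi_run c s.
Proof.
  intros Hs. unfold Phi_run. apply (eq_of_dist_le_pow r _ _ 1 r_unit ltac:(lra)). intros J.
  rewrite (Phi_prepend_expand_phi c s y J), (Phi_prepend_expand_phi c s zero J) by auto.
  match goal with |- Rabs (?a + ?b - (?a + ?d)) <= _ => replace (a + b - (a + d)) with (b - d) by ring end.
  rewrite <- Rmult_minus_distr_l, Rabs_mult, Rabs_right by (apply Rle_ge, pow_le; generalize r_pos; lra).
  match goal with |- _ * Rabs (Phi ?a - Phi ?b) <= _ => generalize (Phi_dist_le_1 a b) end.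
  generalize (pow_le r J (Rlt_le _ _ r_pos)). nra.
Qed.

Lemma Phi_run_S c s : (1 <= s)%nat ->
  Phi_run c s = r * (block_weight (negb c) s * phi (negb c) + Phi_run c (S s)).
Proof.
  intros Hs. unfold Phi_run at 1. rewrite Phi_prepend_step, (Phi_prepend_run c (S s)) by lia.
  destruct s; [lia|]. simpl prepend.
  rewrite <- (Phi_cyl (negb c) (prepend c s (scons (negb c) zero))), negb_involutive. ring.
Qed.

Lemma Phi_run_pos c s : 0 < Phi_run c s. Proof. apply Phi_pos. Qed.
Lemma Phi_run_le_1 c s : Phi_run c s <= 1. Proof. apply Phi_le_1. Qed.

Lemma Phi_ind_block e s x : Phi x * ind_block e (S s) x = Phi_run e (S s) * ind_block e (S s) x.
Proof.
  destruct (ind_block_01 e (S s) x) as [E|E]; rewrite E; [ring|].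
  rewrite (ind_block_prepend _ _ _ E) at 1. rewrite Phi_prepend_run by lia. ring.
Qed.

Lemma phi_ratio_bounds e J :
  weight_sum (negb e) J * phi (negb e) <= phi e <= weight_sum (negb e) J * phi (negb e) + r ^ J.
Proof.
  assert (P := Phi_prepend_expand_phi e 1 zero J ltac:(lia)). simpl prepend in P. fold (phi e) in P.
  replace (psum (fun j => r ^ S j * block_weight (negb e) (1 + j)) J) with (weight_sum (negb e) J) in P
    by (apply psum_ext; reflexivity).
  match goal with P : _ = _ + r ^ J * Phi ?a |- _ => generalize (Phi_pos a) (Phi_le_1 a) end.
  generalize (pow_le r J (Rlt_le _ _ r_pos)). intros. split; nra.
Qed.


Lemma cont_Phi_ind_run e n : continuous_Sigma (fun x => Phi x * ind_run e n x).
Proof. apply cont_mul; [apply Phi_cont|apply cont_ind_run]. Qed.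

Lemma nu_Phi_ind_run e N : nu (fun x => Phi x * ind_run e 1 x) =
  psum (fun m => Phi_run e (S m) * (r ^ m * nu (ind_block e 1))) N
  + nu (fun x => Phi x * ind_run e (S N) x).
Proof.
  induction N; [simpl; ring|].
  rewrite IHN. simpl psum.
  rewrite (pf_ext nu (fun x => Phi x * ind_run e (S N) x)) with (g := fun x =>
    Phi_run e (S N) * ind_block e (S N) x + Phi x * ind_run e (S (S N)) x).
  2:{ intros x. rewrite (ind_run_split e (S N) x), Rmult_plus_distr_l, Phi_ind_block. ring. }
  rewrite (pf_add nu nu_pf), (pf_scale nu nu_pf), (nu_ind_block e N);
    try apply cont_ind_block; try apply cont_Phi_ind_run; [ring|apply cont_scale, cont_ind_block].
Qed.

Definition arith_weight_sum (c : bool) (N : nat) : R :=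
  psum (fun m => INR (S m) * r ^ (S m) * block_weight c (S m)) N.

Lemma psum_Phi_run e N : psum (fun m => Phi_run e (S m) * r ^ m) N =
  phi (negb e) * arith_weight_sum (negb e) N + INR N * (r ^ N * Phi_run e (S N)).
Proof.
  rewrite (psum_by_parts (fun m => Phi_run e (S m) * r ^ m)), Rmult_comm with (r1 := Phi_run e (S N)).
  f_equal. unfold arith_weight_sum. rewrite <- psum_scal. apply psum_ext. intros m.
  rewrite (Phi_run_S e (S m)) by lia. simpl pow. ring.
Qed.

Lemma nu_Phi_ind_run_eq e N : nu (fun x => Phi x * ind_run e 1 x) =
  nu (ind_block e 1) * (phi (negb e) * arith_weight_sum (negb e) N + INR N * (r ^ N * Phi_run e (S N)))
  + nu (fun x => Phi x * ind_run e (S N) x).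
Proof.
  rewrite (nu_Phi_ind_run e N), <- psum_Phi_run, <- psum_scal. f_equal. apply psum_ext; intros; ring.
Qed.

Lemma nu_Phi_ind_run_le e N : nu (fun x => Phi x * ind_run e 1 x) <=
  nu (ind_block e 1) * (phi (negb e) * arith_weight_sum (negb e) N + INR N * r ^ N) + r ^ (S N).
Proof.
  rewrite (nu_Phi_ind_run_eq e N).
  assert (nu (fun x => Phi x * ind_run e (S N) x) <= r ^ S N).
  { eapply Rle_trans; [|apply (nu_ind_run_le e (S N))].
    apply (pf_mono nu nu_pf); [apply cont_Phi_ind_run|apply cont_ind_run|].
    intros x. generalize (Phi_le_1 x) (Phi_pos x) (ind_run_bounds e (S N) x). nra. }
  assert (r ^ N * Phi_run e (S N) <= r ^ N)
    by (generalize (Phi_run_le_1 e (S N)) (pow_le r N (Rlt_le _ _ r_pos)); nra).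
  assert (0 <= nu (ind_block e 1)) by (generalize (nu_ind_block_pos e); lra).
  assert (INR N * (r ^ N * Phi_run e (S N)) <= INR N * r ^ N)
    by (apply Rmult_le_compat_l; auto using pos_INR).
  nra.
Qed.

Lemma nu_Phi_ind_run_ge e N :
  nu (ind_block e 1) * (phi (negb e) * arith_weight_sum (negb e) N) <= nu (fun x => Phi x * ind_run e 1 x).
Proof.
  rewrite (nu_Phi_ind_run_eq e N).
  assert (0 <= nu (fun x => Phi x * ind_run e (S N) x)).
  { apply (pf_nonneg nu nu_pf); [apply cont_Phi_ind_run|].
    intros x. generalize (Phi_pos x) (ind_run_bounds e (S N) x). nra. }
  assert (0 <= r ^ N * Phi_run e (S N))
    by (generalize (Phi_run_pos e (S N)) (pow_le r N (Rlt_le _ _ r_pos)); nra).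
  assert (0 <= nu (ind_block e 1)) by (generalize (nu_ind_block_pos e); lra).
  assert (0 <= INR N * (r ^ N * Phi_run e (S N))) by (apply Rmult_le_pos; auto using pos_INR).
  nra.
Qed.

Lemma nu_Phi_ind_run_pos c : 0 < nu (fun x => Phi x * ind_run c 1 x).
Proof.
  apply Rlt_le_trans with (nu (fun x => Phi_run c 1 * ind_block c 1 x)).
  - rewrite (pf_scale nu nu_pf) by apply cont_ind_block.
    generalize (Phi_run_pos c 1) (nu_ind_block_pos c). nra.
  - apply (pf_mono nu nu_pf); [apply cont_scale, cont_ind_block|apply cont_Phi_ind_run|].
    intros x. rewrite <- (Phi_ind_block c 0 x), (ind_run_split c 1 x).
    generalize (Phi_pos x) (ind_run_bounds c 2 x). nra.
Qed.

Lemma nu_Phi_split c :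
  nu Phi = nu (fun x => Phi x * ind_run c 1 x) + nu (fun x => Phi x * ind_run (negb c) 1 x).
Proof.
  rewrite <- (pf_add nu nu_pf) by apply cont_Phi_ind_run. apply (pf_ext nu). intros x.
  unfold ind_run, b2R. simpl. destruct (x O), c; simpl; ring.
Qed.

Lemma nu_Phi_pos : 0 < nu Phi.
Proof.
  rewrite (nu_Phi_split true). generalize (nu_Phi_ind_run_pos true) (nu_Phi_ind_run_pos false).
  simpl. lra.
Qed.

Lemma nu_ind_block_ratio c :
  phi (negb c) / phi c * nu (ind_block (negb c) 1) <= nu (ind_block c 1).
Proof.
  assert (pc := phi_pos c). set (nd := nu (ind_block (negb c) 1)).
  apply (le_of_le_add_pow r _ _ (nd / phi c) r_unit).
  { apply Rlt_le, Rdiv_lt_0_compat; auto. apply nu_ind_block_pos. }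
  intros J. generalize (nu_ind_block_1_ge c J) (phi_ratio_bounds (negb c) J).
  rewrite negb_involutive. fold nd. intros A [_ B].
  assert (phi (negb c) / phi c <= weight_sum c J + r ^ J / phi c).
  { apply (Rmult_le_reg_r (phi c)); auto. unfold Rdiv.
    rewrite Rmult_plus_distr_r, !Rmult_assoc, Rinv_l by lra. lra. }
  assert (0 < nd) by apply nu_ind_block_pos.
  assert (phi (negb c) / phi c * nd <= (weight_sum c J + r ^ J / phi c) * nd)
    by (apply Rmult_le_compat_r; lra).
  replace (nd / phi c * r ^ J) with (r ^ J / phi c * nd) by (field; lra). nra.
Qed.

Lemma nu_Phi_ind_run_le_sup c Sup : (forall N, arith_weight_sum c N <= Sup) ->
  nu (fun x => Phi x * ind_run (negb c) 1 x) <= nu (ind_block (negb c) 1) * phi c * Sup.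
Proof.
  intros HSup. set (nd := nu (ind_block (negb c) 1)).
  assert (Pd : 0 < nd) by apply nu_ind_block_pos. assert (pc := phi_pos c).
  apply (le_of_le_add_small _ _ (fun N => (nd + 1) * (INR N * r ^ N) + r ^ N)).
  - intros N. generalize (nu_Phi_ind_run_le (negb c) N). rewrite negb_involutive. fold nd.
    generalize (HSup N). intros.
    assert (nd * (phi c * arith_weight_sum c N) <= nd * (phi c * Sup)) by (apply Rmult_le_compat_l; nra).
    assert (r ^ S N <= r ^ N) by (apply pow_le_pow_of_le; [generalize r_unit; lra|lia]).
    assert (0 <= INR N * r ^ N) by (apply Rmult_le_pos; [apply pos_INR|apply pow_le; generalize r_pos; lra]).
    nra.
  - intros e He. destruct (nat_mul_pow_small r r_unit (e / (2 * (nd + 2)))) as [N [HN1 HN]].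
    { apply Rdiv_lt_0_compat; lra. }
    exists N.
    assert (r ^ N <= INR N * r ^ N).
    { rewrite <- (Rmult_1_l (r ^ N)) at 1. apply Rmult_le_compat_r; [apply pow_le; generalize r_pos; lra|].
      apply (le_INR 1); auto. }
    assert (Hlt : (nd + 2) * (INR N * r ^ N) < (nd + 2) * (e / (2 * (nd + 2)))) by (apply Rmult_lt_compat_l; lra).
    replace ((nd + 2) * (e / (2 * (nd + 2)))) with (e / 2) in Hlt by (field; lra).
    nra.
Qed.

Lemma nu_Phi_ind_run_ge_inf c Slow (g : nat -> R) :
  (forall N, Slow - g N <= arith_weight_sum (negb c) N) -> (forall e, 0 < e -> exists N, g N < e) ->
  nu (ind_block c 1) * phi (negb c) * Slow <= nu (fun x => Phi x * ind_run c 1 x).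
Proof.
  intros HSlow Hg. set (nc := nu (ind_block c 1)).
  assert (Pc : 0 < nc) by apply nu_ind_block_pos. assert (pd := phi_pos (negb c)).
  apply (le_of_le_add_small _ _ (fun N => nc * phi (negb c) * g N)).
  - intros N. generalize (nu_Phi_ind_run_ge c N) (HSlow N). fold nc. intros.
    assert (nc * phi (negb c) * (Slow - g N) <= nc * phi (negb c) * arith_weight_sum (negb c) N)
      by (apply Rmult_le_compat_l; nra).
    nra.
  - intros e He. destruct (Hg (e / (nc * phi (negb c)))) as [N HN]; [apply Rdiv_lt_0_compat; nra|].
    exists N. assert (0 < nc * phi (negb c)) by nra.
    apply (Rmult_lt_compat_l (nc * phi (negb c))) in HN; auto.
    replace (nc * phi (negb c) * (e / (nc * phi (negb c)))) with e in HN by (field; lra). lra.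
Qed.

Lemma nu_Phi_cyl_ratio c Sup Slow (g : nat -> R) :
  (forall N, arith_weight_sum c N <= Sup) ->
  (forall N, Slow - g N <= arith_weight_sum (negb c) N) ->
  (forall e, 0 < e -> exists N, g N < e) -> 0 < Slow ->
  nu (fun x => Phi x * ind_run (negb c) 1 x) <=
  (phi c / phi (negb c)) ^ 2 * Sup / Slow * nu (fun x => Phi x * ind_run c 1 x).
Proof.
  intros HSup HSlow Hg HSl.
  assert (Num := nu_Phi_ind_run_le_sup c Sup HSup).
  assert (Den := nu_Phi_ind_run_ge_inf c Slow g HSlow Hg).
  assert (NC := nu_ind_block_ratio c).
  set (nc := nu (ind_block c 1)) in *. set (nd := nu (ind_block (negb c) 1)) in *.
  set (D := nu (fun x => Phi x * ind_run c 1 x)) in *.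
  assert (Pd : 0 < nd) by apply nu_ind_block_pos.
  assert (pc := phi_pos c). assert (pd := phi_pos (negb c)).
  assert (Sup0 : 0 <= Sup) by (generalize (HSup O); unfold arith_weight_sum; simpl; lra).
  assert (K : (phi c / phi (negb c)) ^ 2 * Sup / Slow * (phi (negb c) / phi c * nd * phi (negb c) * Slow)
              <= (phi c / phi (negb c)) ^ 2 * Sup / Slow * D).
  { apply Rmult_le_compat_l.
    - unfold Rdiv. apply Rmult_le_pos; [apply Rmult_le_pos; [apply pow2_ge_0|auto]|].
      apply Rlt_le, Rinv_0_lt_compat; auto.
    - assert (phi (negb c) / phi c * nd * phi (negb c) * Slow <= nc * phi (negb c) * Slow)
        by (apply Rmult_le_compat_r; [lra|]; apply Rmult_le_compat_r; lra).
      lra. }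
  replace ((phi c / phi (negb c)) ^ 2 * Sup / Slow * (phi (negb c) / phi c * nd * phi (negb c) * Slow))
    with (nd * phi c * Sup) in K by (field; lra).
  lra.
Qed.


Lemma gibbs_prob : is_prob_functional (gibbs Phi nu).
Proof.
  assert (P := nu_Phi_pos). unfold gibbs. repeat split.
  - intros f g Hf Hg.
    rewrite (pf_ext nu _ (fun x => Phi x * f x + Phi x * g x)) by (intros; ring).
    rewrite (pf_add nu nu_pf) by (apply cont_mul; auto; apply Phi_cont). field. lra.
  - intros a f Hf. rewrite (pf_ext nu _ (fun x => a * (Phi x * f x))) by (intros; ring).
    rewrite (pf_scale nu nu_pf) by (apply cont_mul; auto; apply Phi_cont). field. lra.
  - intros f Hf Hp. apply Rmult_le_pos; [|left; apply Rinv_0_lt_compat; auto].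
    apply (pf_nonneg nu nu_pf); [apply cont_mul; auto; apply Phi_cont|].
    intros x; generalize (Phi_pos x) (Hp x); nra.
  - rewrite (pf_ext nu _ Phi) by (intros; ring). field. lra.
Qed.

(* Shift invariance is the eigen-equations of [Phi] and [nu] combined:
   [nu (Phi * f o shift) = r nu (transfer (Phi * f o shift)) = nu (Phi * f)]. *)
Lemma gibbs_shift f : continuous_Sigma f -> gibbs Phi nu (fun x => f (shift x)) = gibbs Phi nu f.
Proof.
  intros Hf. unfold gibbs. f_equal.
  rewrite nu_transfer by (apply cont_mul; [apply Phi_cont|apply cont_shift; auto]).
  rewrite (pf_ext nu _ (fun x => lam * (Phi x * f x))).
  - rewrite (pf_scale nu nu_pf) by (apply cont_mul; auto; apply Phi_cont).
    unfold r. generalize lam_gt_1; intros. field. lra.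
  - intros x. rewrite <- Rmult_assoc, <- (Phi_eigen x). unfold transfer, shift. simpl.
    change (fun i => x i) with x. ring.
Qed.

Lemma gibbs_ind_run_le c : gibbs Phi nu (ind_run (negb c) 1) <=
  nu (fun x => Phi x * ind_run (negb c) 1 x) / nu (fun x => Phi x * ind_run c 1 x).
Proof.
  unfold gibbs. rewrite (nu_Phi_split c).
  generalize (nu_Phi_ind_run_pos c) (nu_Phi_ind_run_pos (negb c)). intros.
  unfold Rdiv. apply Rmult_le_compat_l; [lra|]. apply Rinv_le_contravar; lra.
Qed.


Lemma phi_ratio_geom_bounds c P d e :
  0 <= d -> 0 <= e ->
  (forall t, (1 <= t <= P)%nat -> block_weight c t <= d) ->
  (forall t, (P < t)%nat -> e <= block_weight c t) ->
  e * geom_tail r (S P) <= phi (negb c) / phi c <= d * INR P + geom_tail r (S P).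
Proof.
  intros Hd He Hlow Hhigh. generalize r_pos r_unit; intros.
  assert (pc := phi_pos c). assert (pd := phi_pos (negb c)).
  assert (Hw : forall t, (1 <= t)%nat -> 0 <= block_weight c t <= 1)
    by (intros t Ht; split; [left; apply block_weight_pos|apply block_weight_le_1; auto]).
  assert (HWs : forall J, weight_sum c J * phi c <= phi (negb c) <= weight_sum c J * phi c + r ^ J).
  { intros J. generalize (phi_ratio_bounds (negb c) J). rewrite negb_involutive. auto. }
  split.
  - apply (le_of_le_add_small _ _ (fun J => e * geom_tail r (S (Nat.max J P)))).
    + intros J.
      assert (G := psum_geom_weight_ge r ltac:(lra) (block_weight c) e P He Hhigh
                     (fun t => Rlt_le _ _ (block_weight_pos c t)) J).
      fold (weight_sum c J) in G.
      assert (weight_sum c J <= phi (negb c) / phi c).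
      { apply (Rmult_le_reg_r (phi c)); auto. unfold Rdiv.
        rewrite Rmult_assoc, Rinv_l, Rmult_1_r by lra. apply HWs. }
      lra.
    + intros e0 He0. destruct (Req_dec e 0) as [E|E]; [exists O; rewrite E; lra|].
      destruct (geom_tail_small r ltac:(lra) (e0 / e)) as [J HJ]; [apply Rdiv_lt_0_compat; lra|].
      exists J. specialize (HJ (S (Nat.max J P)) ltac:(lia)).
      apply (Rmult_lt_compat_l e) in HJ; [|lra].
      replace (e * (e0 / e)) with e0 in HJ by (field; auto). auto.
  - apply (le_of_le_add_pow r _ _ (/ phi c) r_unit); [left; apply Rinv_0_lt_compat; auto|]. intros J.
    assert (G := psum_geom_weight_le r ltac:(lra) (block_weight c) d P Hlow Hw J).
    fold (weight_sum c J) in G.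
    assert (INR (Nat.min J P) <= INR P) by (apply le_INR; lia).
    assert (0 <= geom_tail r (S (Nat.max J P))) by (apply geom_tail_nonneg; lra).
    assert (weight_sum c J <= d * INR P + geom_tail r (S P)) by nra.
    assert (phi (negb c) / phi c <= weight_sum c J + r ^ J * / phi c).
    { apply (Rmult_le_reg_r (phi c)); auto. unfold Rdiv.
      rewrite Rmult_plus_distr_r, !Rmult_assoc, Rinv_l, !Rmult_1_r by lra. apply HWs. }
    lra.
Qed.

Lemma arith_weight_sum_le c P d : 0 <= d ->
  (forall t, (1 <= t <= P)%nat -> block_weight c t <= d) ->
  forall N, arith_weight_sum c N <= d * INR P * INR P + arith_geom_tail r (S P).
Proof.
  intros Hd Hlow N. generalize r_pos r_unit. intros.
  assert (Hw : forall t, (1 <= t)%nat -> 0 <= block_weight c t <= 1)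
    by (intros t Ht; split; [left; apply block_weight_pos|apply block_weight_le_1; auto]).
  assert (G := psum_arith_geom_weight_le r ltac:(lra) (block_weight c) d P Hd Hlow Hw N).
  assert (INR (Nat.min N P) <= INR P) by (apply le_INR; lia).
  assert (0 <= arith_geom_tail r (S (Nat.max N P))) by (left; apply arith_geom_tail_pos; lra).
  assert (0 <= d * INR P) by (apply Rmult_le_pos; [lra|apply pos_INR]).
  assert (d * INR P * INR (Nat.min N P) <= d * INR P * INR P) by (apply Rmult_le_compat_l; auto).
  unfold arith_weight_sum. lra.
Qed.

Lemma gibbs_ind_run_le_bound c P Q d e W :
  (P < Q)%nat -> 0 < d <= 1 -> 1/2 <= e <= 1 -> 1 <= W ->
  W * exp (2 * W) < INR (S Q) * e ->
  d ^ 2 * INR Q ^ 2 + 2 * d * INR Q * INR (S Q) <= 1/2 ->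
  (forall t, (1 <= t <= P)%nat -> block_weight c t <= d) ->
  (forall t, (P < t)%nat -> e <= block_weight c t) ->
  (forall t, (1 <= t <= Q)%nat -> block_weight (negb c) t <= d) ->
  (forall t, (Q < t)%nat -> e <= block_weight (negb c) t) ->
  gibbs Phi nu (ind_run (negb c) 1) <=
  ((4 * d ^ 2 * INR Q ^ 2 + 2) * (d * INR P * INR P)
   + 8 * d ^ 2 * INR Q ^ 2 * (INR (S P) * INR (S Q) + INR (S Q) ^ 2)
   + (2 / e ^ 2) * (INR (S P) / INR (S Q) + 1 / W)) / e.
Proof.
  intros HPQ Hd He HW HWQ Hsm h1 h2 h3 h4. generalize r_pos r_range; intros.
  assert (pc := phi_pos c). assert (pd := phi_pos (negb c)).
  assert (RA := phi_ratio_geom_bounds c P d e ltac:(lra) ltac:(lra) h1 h2).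
  assert (RB := phi_ratio_geom_bounds (negb c) Q d e ltac:(lra) ltac:(lra) h3 h4).
  rewrite negb_involutive in RB.
  set (Sup := d * INR P * INR P + arith_geom_tail r (S P)).
  set (Slow := e * arith_geom_tail r (S Q)).
  assert (Hslow : 0 < Slow) by (unfold Slow; apply Rmult_lt_0_compat; [lra|apply arith_geom_tail_pos; lra]).
  assert (R1 : nu (fun x => Phi x * ind_run (negb c) 1 x)
               <= (phi c / phi (negb c)) ^ 2 * Sup / Slow * nu (fun x => Phi x * ind_run c 1 x)).
  { apply (nu_Phi_cyl_ratio c Sup Slow (fun N => e * arith_geom_tail r (S (Nat.max N Q)))); auto.
    - apply arith_weight_sum_le; auto; lra.
    - intros N. unfold Slow, arith_weight_sum.
      generalize (psum_arith_geom_weight_ge r ltac:(lra) (block_weight (negb c)) e Q ltac:(lra) h4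
                    (fun t => Rlt_le _ _ (block_weight_pos (negb c) t)) N). lra.
    - intros e0 He0.
      destruct (arith_geom_tail_small r ltac:(lra) (e0 / e)) as [m Hm]; [apply Rdiv_lt_0_compat; lra|].
      exists m. specialize (Hm (S (Nat.max m Q)) ltac:(lia)).
      apply (Rmult_lt_compat_l e) in Hm; [|lra].
      replace (e * (e0 / e)) with e0 in Hm by (field; lra). auto. }
  assert (Pc := nu_Phi_ind_run_pos c).
  eapply Rle_trans; [apply gibbs_ind_run_le|].
  eapply Rle_trans.
  { apply (Rmult_le_reg_r (nu (fun x => Phi x * ind_run c 1 x))); auto.
    unfold Rdiv at 1. rewrite Rmult_assoc, Rinv_l, Rmult_1_r by lra. apply R1. }
  apply (two_well_bound P Q d e r (phi (negb c) / phi c) (phi c / phi (negb c)) W); auto; try lra.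
  - apply Rdiv_lt_0_compat; auto.
  - apply Rdiv_lt_0_compat; auto.
  - field; lra.
Qed.
End Eigendata.

(** * Shift-invariant measures with little mass off [c^oo] *)

(* Off the cylinder [c^N] some shift [shiftn i x], [i < N], starts with [negb c]. *)
Lemma const_seq_dist_le (c : bool) f eps M N x :
  (forall x, Rabs (f x) <= M) -> (forall x y, agree N x y -> Rabs (f x - f y) < eps) ->
  Rabs (f x - f (const_seq c)) <= eps + 2 * M * psum (fun i => ind_run (negb c) 1 (shiftn i x)) N.
Proof.
  intros HM HN.
  assert (HM0 : 0 <= M) by (generalize (HM x) (Rabs_pos (f x)); lra).
  assert (Heps : 0 < eps)
    by (generalize (HN x x (fun _ _ => eq_refl)); rewrite Rminus_diag, Rabs_R0; auto).
  assert (S0 : 0 <= psum (fun i => ind_run (negb c) 1 (shiftn i x)) N)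
    by (apply psum_nonneg; intros; apply ind_run_bounds).
  destruct (classic (forall i, (i < N)%nat -> x i = c)) as [Hall|Hn].
  - assert (Rabs (f x - f (const_seq c)) < eps) by (apply HN; intros i Hi; rewrite Hall; auto).
    nra.
  - apply not_all_ex_not in Hn. destruct Hn as [i Hi].
    apply imply_to_and in Hi. destruct Hi as [Hi Hxi].
    assert (E : ind_run (negb c) 1 (shiftn i x) = 1).
    { unfold ind_run, b2R, shiftn. simpl. rewrite Nat.add_0_r.
      destruct (x i), c; simpl; auto; congruence. }
    assert (1 <= psum (fun i => ind_run (negb c) 1 (shiftn i x)) N).
    { rewrite <- E. apply (psum_ge_term (fun i => ind_run (negb c) 1 (shiftn i x))); auto.
      intros; apply ind_run_bounds. }
    assert (Rabs (f x - f (const_seq c)) <= 2 * M).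
    { unfold Rminus. eapply Rle_trans; [apply Rabs_triang|]. rewrite Rabs_Ropp.
      generalize (HM x) (HM (const_seq c)). lra. }
    nra.
Qed.

Section ShiftInvariant.
Variable mu : (Sigma -> R) -> R.
Hypothesis Hmu : is_prob_functional mu.
Hypothesis Hshift : forall f, continuous_Sigma f -> mu (fun x => f (shift x)) = mu f.

Lemma pf_shiftn f k : continuous_Sigma f -> mu (fun x => f (shiftn k x)) = mu f.
Proof.
  intros Hf. induction k; [apply (pf_ext mu); reflexivity|].
  rewrite <- IHk. change (fun x => f (shiftn (S k) x)) with (fun x => (fun y => f (shiftn k y)) (shift x)).
  apply Hshift, cont_shiftn; auto.
Qed.

Lemma pf_dist_const_seq_le (c : bool) f eps M N : continuous_Sigma f ->
  (forall x, Rabs (f x) <= M) -> (forall x y, agree N x y -> Rabs (f x - f y) < eps) ->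
  Rabs (mu f - f (const_seq c)) <= eps + (2 * M * INR N) * mu (ind_run (negb c) 1).
Proof.
  intros Hf HM HN.
  set (h := fun x => eps + 2 * M * psum (fun i => ind_run (negb c) 1 (shiftn i x)) N).
  assert (Hcont : forall i, continuous_Sigma (fun x => ind_run (negb c) 1 (shiftn i x)))
    by (intros i; apply cont_shiftn, cont_ind_run).
  assert (Hh : continuous_Sigma h) by (apply cont_add, cont_scale, cont_psum; auto using cont_const).
  assert (Eh : mu h = eps + 2 * M * (INR N * mu (ind_run (negb c) 1))).
  { unfold h. rewrite (pf_add mu Hmu), (pf_scale mu Hmu), (pf_const mu Hmu), (pf_psum mu Hmu)
      by (auto using cont_const, cont_scale, cont_psum).
    rewrite (psum_ext _ (fun _ => mu (ind_run (negb c) 1))), psum_const; auto.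
    intros i. apply pf_shiftn, cont_ind_run. }
  assert (C1 : continuous_Sigma (fun x => f x - f (const_seq c))) by (apply cont_sub; auto using cont_const).
  assert (Pw : forall x, - h x <= f x - f (const_seq c) <= h x).
  { intros x. generalize (const_seq_dist_le c f eps M N x HM HN)
      (Rle_abs (f x - f (const_seq c))) (Rle_abs (- (f x - f (const_seq c)))).
    rewrite Rabs_Ropp. unfold h. lra. }
  rewrite <- (pf_const mu Hmu (f (const_seq c))) at 1.
  rewrite <- (pf_sub mu Hmu) by (auto using cont_const).
  assert (U : mu (fun x => f x - f (const_seq c)) <= mu h)
    by (apply (pf_mono mu Hmu); auto; intros x; apply Pw).
  assert (L : mu (fun x => (-1) * h x) <= mu (fun x => f x - f (const_seq c)))
    by (apply (pf_mono mu Hmu); auto using cont_scale; intros x; generalize (Pw x); lra).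
  rewrite (pf_scale mu Hmu) in L by auto.
  apply Rabs_le. rewrite Eh in U, L. split; nra.
Qed.
End ShiftInvariant.

Lemma weak_cv_dirac_of_small_mass (mu : nat -> (Sigma -> R) -> R) (c : bool) (L0 : nat) :
  (forall l, (L0 <= l)%nat -> is_prob_functional (mu l) /\
     forall f, continuous_Sigma f -> mu l (fun x => f (shift x)) = mu l f) ->
  (forall e, 0 < e -> exists L, forall l, (L <= l)%nat -> mu l (ind_run (negb c) 1) <= e) ->
  weak_cv_dirac mu (const_seq c).
Proof.
  intros Hmu Hsmall f Hf eps He.
  destruct (cont_bounded f Hf) as [M HM].
  assert (HM0 : 0 <= M) by (generalize (HM (const_seq c)) (Rabs_pos (f (const_seq c))); lra).
  destruct (unif_cont f Hf (eps / 2) ltac:(lra)) as [N HN].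
  set (K := 2 * M * INR N).
  assert (HK : 0 <= K) by (unfold K; generalize (pos_INR N); nra).
  destruct (Hsmall (eps / (4 * (K + 1)))) as [L HL]; [apply Rdiv_lt_0_compat; lra|].
  exists (L + L0)%nat. intros l Hl. unfold R_dist.
  destruct (Hmu l ltac:(lia)) as [Hpf Hsh].
  assert (B := pf_dist_const_seq_le (mu l) Hpf Hsh c f (eps / 2) M N Hf HM HN). fold K in B.
  specialize (HL l ltac:(lia)).
  assert (K * mu l (ind_run (negb c) 1) <= K * (eps / (4 * (K + 1)))) by (apply Rmult_le_compat_l; auto).
  assert (K * (eps / (4 * (K + 1))) < eps / 2).
  { apply (Rmult_lt_reg_r (4 * (K + 1))); [lra|].
    replace (K * (eps / (4 * (K + 1))) * (4 * (K + 1))) with (K * eps) by (field; lra). nra. }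
  lra.
Qed.

Lemma incr_mono (p : nat -> nat) : (forall k, (p k < p (S k))%nat) ->
  forall a b, (a <= b)%nat -> (p a <= p b)%nat.
Proof. intros Hp a b Hab. induction Hab; auto. specialize (Hp m). lia. Qed.

Lemma incr_ge (p : nat -> nat) : (forall k, (p k < p (S k))%nat) -> forall k, (k <= p k)%nat.
Proof. intros Hp k. induction k; [lia|]. specialize (Hp k). lia. Qed.

Lemma decr_mono (eps : nat -> R) : (forall k, eps (S k) <= eps k) ->
  forall a b, (a <= b)%nat -> eps b <= eps a.
Proof. intros He a b Hab. induction Hab; [lra|]. specialize (He m). lra. Qed.

Lemma block_index (p : nat -> nat) : (forall k, (p k < p (S k))%nat) ->
  forall n t, (1 <= t <= p n)%nat -> exists j, (prev p j < t <= p j)%nat.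
Proof.
  intros Hp n. induction n; intros t Ht.
  - exists O. simpl. lia.
  - destruct (le_lt_dec t (p n)); [apply IHn; lia|]. exists (S n). simpl. lia.
Qed.

Lemma exp_neg_mul_le beta a b : 0 <= beta -> b <= a -> exp (- (beta * a)) <= exp (- (beta * b)).
Proof.
  intros Hb Hab. destruct (Req_dec (beta * a) (beta * b)) as [->|]; [lra|].
  left. apply exp_increasing. nra.
Qed.

Lemma block_exp_bounds (p : nat -> nat) (eps : nat -> R) (Hs : nat -> R) (beta : R) (k : nat) :
  (forall k, (p k < p (S k))%nat) -> (forall k, eps (S k) <= eps k) -> 0 <= beta ->
  (forall j n, (prev p j < n <= p j)%nat -> Hs n = eps j) ->
  (forall t, (1 <= t <= p k)%nat -> exp (- beta * Hs t) <= exp (- (beta * eps k))) /\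
  (forall t, (p k < t)%nat -> exp (- (beta * eps (S k))) <= exp (- beta * Hs t)).
Proof.
  intros Hp He Hb Hblk. split.
  - intros t Ht. destruct (block_index p Hp k t Ht) as [j Hj]. rewrite (Hblk j t Hj).
    assert (j <= k)%nat.
    { destruct (le_lt_dec j k); auto. destruct j; [lia|]. simpl in Hj.
      assert (p k <= p j)%nat by (apply incr_mono; auto; lia). lia. }
    rewrite Ropp_mult_distr_l_reverse. apply exp_neg_mul_le; auto. apply decr_mono; auto.
  - intros t Ht. destruct (block_index p Hp t t) as [j Hj]; [split; [lia|]; apply incr_ge; auto|].
    rewrite (Hblk j t Hj).
    assert (S k <= j)%nat.
    { destruct (le_lt_dec (S k) j); auto. assert (p j <= p k)%nat by (apply incr_mono; auto; lia). lia. }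
    rewrite Ropp_mult_distr_l_reverse. apply exp_neg_mul_le; auto. apply decr_mono; auto.
Qed.

Lemma two_well_small_d (Q : nat) d : (1 <= Q)%nat -> 0 < d -> d * INR Q ^ 2 <= 1/10 ->
  d ^ 2 * INR Q ^ 2 + 2 * d * INR Q * INR (S Q) <= 1/2.
Proof.
  intros HQ1 Hd Ht. rewrite S_INR. set (Qr := INR Q) in *. set (t := d * Qr ^ 2) in *.
  assert (HQr : 1 <= Qr) by (apply (le_INR 1); auto).
  assert (Ht0 : 0 < t) by (unfold t; apply Rmult_lt_0_compat; auto; simpl; nra).
  assert (a1 : d ^ 2 * Qr ^ 2 <= t ^ 2).
  { unfold t. simpl. assert (Qr * Qr >= 1) by nra. assert (0 <= d * d) by nra. nra. }
  assert (a3 : d * Qr * (Qr + 1) <= 2 * t)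
    by (unfold t; simpl; assert (0 <= d * Qr * (Qr - 1)) by (apply Rmult_le_pos; nra); nra).
  assert (t ^ 2 <= t / 10) by (simpl; nra).
  lra.
Qed.

Lemma two_well_bound_small eps0 : 0 < eps0 -> exists W tau rho, 1 <= W /\ 0 < tau /\ 0 < rho /\
  forall (P Q : nat) d e, (P < Q)%nat -> 0 < d -> d * INR Q ^ 2 <= tau ->
    INR (S P) / INR (S Q) <= rho -> 1/2 <= e <= 1 ->
    ((4 * d ^ 2 * INR Q ^ 2 + 2) * (d * INR P * INR P)
     + 8 * d ^ 2 * INR Q ^ 2 * (INR (S P) * INR (S Q) + INR (S Q) ^ 2)
     + (2 / e ^ 2) * (INR (S P) / INR (S Q) + 1 / W)) / e <= eps0.
Proof.
  intros He0. exists (1 + 64 / eps0), (Rmin (1/10) (eps0 / 68)), (eps0 / 64).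
  assert (P64 : 0 < 64 / eps0) by (apply Rdiv_lt_0_compat; lra).
  split; [lra|]. split; [apply Rmin_pos; lra|]. split; [lra|].
  intros P Q d e HPQ Hd Ht Hr He.
  set (Pr := INR P) in *. set (Qr := INR Q) in *.
  assert (HPr : 0 <= Pr) by apply pos_INR.
  assert (HPQr : Pr <= Qr) by (apply le_INR; lia).
  assert (HQr : 1 <= Qr) by (apply (le_INR 1); lia).
  assert (ESP : INR (S P) = Pr + 1) by apply S_INR.
  assert (ESQ : INR (S Q) = Qr + 1) by apply S_INR.
  rewrite ESP, ESQ in *.
  set (t := d * Qr ^ 2) in *.
  assert (Ht1 : t <= 1/10) by (generalize (Rmin_l (1/10) (eps0/68)); lra).
  assert (Ht2 : t <= eps0 / 68) by (generalize (Rmin_r (1/10) (eps0/68)); lra).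
  assert (Ht0 : 0 < t) by (unfold t; apply Rmult_lt_0_compat; auto; simpl; nra).
  assert (a1 : d ^ 2 * Qr ^ 2 <= t ^ 2).
  { unfold t. simpl. assert (Qr * Qr >= 1) by nra. assert (0 <= d * d) by nra. nra. }
  assert (a2 : d * Pr * Pr <= t) by (unfold t; simpl; assert (Pr * Pr <= Qr * Qr) by nra; nra).
  assert (a5 : 8 * d ^ 2 * Qr ^ 2 * ((Pr + 1) * (Qr + 1) + (Qr + 1) ^ 2) <= 64 * t ^ 2).
  { assert (d ^ 2 * Qr ^ 2 * ((Pr + 1) * (Qr + 1) + (Qr + 1) ^ 2) <= d ^ 2 * Qr ^ 2 * (8 * Qr ^ 2))
      by (apply Rmult_le_compat_l; [simpl; nra|simpl; nra]).
    unfold t. simpl in *. nra. }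
  assert (a6 : (4 * d ^ 2 * Qr ^ 2 + 2) * (d * Pr * Pr) <= (4 * t ^ 2 + 2) * t)
    by (apply Rmult_le_compat; try nra).
  assert (He2 : 2 / e ^ 2 <= 8).
  { apply (Rmult_le_reg_r (e ^ 2)); [nra|].
    unfold Rdiv. rewrite Rmult_assoc, Rinv_l by (simpl; nra). simpl; nra. }
  assert (HW : 1 / (1 + 64 / eps0) <= eps0 / 64).
  { apply (Rmult_le_reg_r (1 + 64 / eps0)); [lra|].
    unfold Rdiv. rewrite Rmult_assoc, Rinv_l by lra.
    replace (eps0 * / 64 * (1 + 64 * / eps0)) with (eps0 / 64 + 1) by (field; lra). lra. }
  assert (a7 : (2 / e ^ 2) * ((Pr + 1) / (Qr + 1) + 1 / (1 + 64 / eps0)) <= 8 * (eps0 / 64 + eps0 / 64)).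
  { apply Rmult_le_compat; try lra.
    - unfold Rdiv; apply Rmult_le_pos; [lra|]. left; apply Rinv_0_lt_compat; simpl; nra.
    - apply Rplus_le_le_0_compat; unfold Rdiv; apply Rmult_le_pos; try lra;
        left; apply Rinv_0_lt_compat; lra. }
  set (T := (4 * d ^ 2 * Qr ^ 2 + 2) * (d * Pr * Pr) + 8 * d ^ 2 * Qr ^ 2 * ((Pr + 1) * (Qr + 1) + (Qr + 1) ^ 2)
    + 2 / e ^ 2 * ((Pr + 1) / (Qr + 1) + 1 / (1 + 64 / eps0))).
  assert (t ^ 2 <= t / 10) by (simpl; nra). assert (t ^ 3 <= t / 100) by (simpl; nra).
  assert ((4 * t ^ 2 + 2) * t + 64 * t ^ 2 <= 9 * t)
    by (replace ((4 * t ^ 2 + 2) * t) with (4 * t ^ 3 + 2 * t) by ring; lra).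
  assert (T <= 3 * eps0 / 8) by (unfold T; lra).
  apply (Rmult_le_reg_r e); [lra|]. unfold Rdiv. rewrite Rmult_assoc, Rinv_l by lra. nra.
Qed.

Lemma Un_cv_subseq (u : nat -> R) L (kap : nat -> nat) :
  Un_cv u L -> (forall l, (l <= kap l)%nat) -> Un_cv (fun l => u (kap l)) L.
Proof. intros Hu Hk e He. destruct (Hu e He) as [N HN]. exists N. intros n Hn. apply HN. specialize (Hk n). lia. Qed.

Lemma ratio_eventually_small (P Q : nat -> nat) :
  cv_infty (fun l => INR (Q l) / INR (P l)) -> (forall l, (1 <= P l)%nat) ->
  forall rho, 0 < rho -> exists L, forall l, (L <= l)%nat -> INR (S (P l)) / INR (S (Q l)) <= rho.
Proof.
  intros Hc HP rho Hrho. destruct (Hc (2 / rho)) as [N HN]. exists N. intros l Hl. specialize (HN l Hl).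
  assert (Ha : 1 <= INR (P l)) by (apply (le_INR 1); auto).
  set (a := INR (P l)) in *. set (b := INR (Q l)) in *.
  assert (Hb0 : 0 <= b) by apply pos_INR.
  rewrite !S_INR. fold a b.
  assert (2 * a < rho * b).
  { apply (Rmult_lt_compat_r a) in HN; [|lra]. unfold Rdiv at 2 in HN.
    rewrite Rmult_assoc, Rinv_l in HN by lra.
    apply (Rmult_lt_compat_l rho) in HN; auto.
    replace (rho * (2 / rho * a)) with (2 * a) in HN by (field; lra). lra. }
  apply (Rmult_le_reg_r (b + 1)); [lra|]. unfold Rdiv. rewrite Rmult_assoc, Rinv_l by lra. nra.
Qed.

Lemma half_le_exp_neg x : x < 1/2 -> 1/2 <= exp (- x).
Proof. intros Hx. generalize (exp_ineq1_le (- x)). lra. Qed.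

(* Along [kap], the symbol [c] has the shorter well ([P l]) and [negb c] the longer one
   ([Q l]): blocks up to these lengths are suppressed, longer ones cost almost nothing. *)
Section Subsequence.
Variables (p q : nat -> nat) (eps beta : nat -> R) (H : Sigma -> R) (H0 H1 : nat -> R).
Variables (Phi : nat -> Sigma -> R) (lam : nat -> R) (nu : nat -> (Sigma -> R) -> R).
Variables (kap : nat -> nat) (c : bool).
Hypothesis Hp_pos : forall k, (0 < p k)%nat.
Hypothesis Hq_pos : forall k, (0 < q k)%nat.
Hypothesis Hp_incr : forall k, (p k < p (S k))%nat.
Hypothesis Hq_incr : forall k, (q k < q (S k))%nat.
Hypothesis Heps_pos : forall k, 0 < eps k.
Hypothesis Heps_decr : forall k, eps (S k) <= eps k.
Hypothesis Hbeta : cv_infty beta.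
Hypothesis HH0 : forall k n, (prev p k < n <= p k)%nat -> H0 n = eps k.
Hypothesis HH1 : forall k n, (prev q k < n <= q k)%nat -> H1 n = eps k.
Hypothesis RDW : reduced_double_well H H0 H1.
Hypothesis EF : forall k, is_eigenfunction H (beta k) (lam k) (Phi k).
Hypothesis EM : forall k, is_eigenmeasure H (beta k) (lam k) (nu k).
Hypothesis Hkap : forall l, (l <= kap l)%nat.
Hypothesis HPQ : forall l, (well p q c (kap l) < well p q (negb c) (kap l))%nat.
Hypothesis Hsuppress :
  Un_cv (fun l => INR (well p q (negb c) (kap l)) ^ 2 * exp (- (beta (kap l) * eps (kap l)))) 0.
Hypothesis Hfree : Un_cv (fun l => beta (kap l) * eps (S (kap l))) 0.
Hypothesis Hratio :
  cv_infty (fun l => INR (well p q (negb c) (kap l)) / INR (well p q c (kap l))).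

Lemma beta_eventually_nonneg : exists L, forall l, (L <= l)%nat -> 0 <= beta (kap l).
Proof.
  destruct (Hbeta 0) as [N HN]. exists N. intros l Hl. left. apply HN. specialize (Hkap l). lia.
Qed.

Lemma block_weight_thresholds b l : 0 <= beta (kap l) ->
  (forall t, (1 <= t <= well p q b (kap l))%nat ->
     block_weight H0 H1 (beta (kap l)) b t <= exp (- (beta (kap l) * eps (kap l)))) /\
  (forall t, (well p q b (kap l) < t)%nat ->
     exp (- (beta (kap l) * eps (S (kap l)))) <= block_weight H0 H1 (beta (kap l)) b t).
Proof.
  intros Hb. unfold block_weight. destruct b; simpl.
  - apply block_exp_bounds; auto.
  - apply block_exp_bounds; auto.
Qed.

Lemma gibbs_mass_small e0 : 0 < e0 -> exists L, forall l, (L <= l)%nat ->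
  gibbs (Phi (kap l)) (nu (kap l)) (ind_run (negb c) 1) <= e0.
Proof.
  intros He0.
  destruct (two_well_bound_small e0 He0) as [W [tau [rho [HW [Htau [Hrho Hbound]]]]]].
  destruct beta_eventually_nonneg as [N0 HN0].
  destruct (Hsuppress (Rmin tau (1/10)) ltac:(apply Rmin_pos; lra)) as [N1 HN1].
  destruct (Hfree (1/2) ltac:(lra)) as [N2 HN2].
  destruct (ratio_eventually_small _ _ Hratio
              ltac:(intros l; destruct c; simpl; [apply Hq_pos|apply Hp_pos]) rho Hrho) as [N3 HN3].
  destruct (INR_unbounded (2 * W * exp (2 * W))) as [N4 HN4].
  exists (N0 + N1 + N2 + N3 + N4 + 1)%nat. intros l Hl.
  specialize (HN0 l ltac:(lia)). specialize (HN1 l ltac:(lia)). specialize (HN2 l ltac:(lia)).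
  set (P := well p q c (kap l)) in *. set (Q := well p q (negb c) (kap l)) in *.
  set (d := exp (- (beta (kap l) * eps (kap l)))) in *.
  set (e := exp (- (beta (kap l) * eps (S (kap l))))) in *.
  unfold R_dist in HN1, HN2. rewrite Rminus_0_r in HN1, HN2.
  apply Rabs_def2 in HN1. apply Rabs_def2 in HN2.
  assert (HQl : (l <= Q)%nat).
  { assert (Hwell : forall b, (kap l <= well p q b (kap l))%nat)
      by (intros []; simpl; apply incr_ge; auto).
    generalize (Hkap l) (Hwell (negb c)). unfold Q. lia. }
  assert (Hd : 0 < d <= 1) by (split; [apply exp_pos|apply exp_le_1; generalize (Heps_pos (kap l)); nra]).
  assert (He : 1/2 <= e <= 1)
    by (split; [apply half_le_exp_neg; lra|apply exp_le_1; generalize (Heps_pos (S (kap l))); nra]).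
  assert (HdQ : d * INR Q ^ 2 <= Rmin tau (1/10)) by lra.
  assert (HQ : 2 * W * exp (2 * W) < INR (S Q)) by (apply Rlt_le_trans with (INR N4); [lra|apply le_INR; lia]).
  destruct (block_weight_thresholds c l HN0) as [h1 h2].
  destruct (block_weight_thresholds (negb c) l HN0) as [h3 h4].
  eapply Rle_trans.
  - apply (gibbs_ind_run_le_bound H H0 H1 (beta (kap l)) (lam (kap l)) (Phi (kap l)) (nu (kap l))
             RDW (EF (kap l)) (EM (kap l)) HN0 c P Q d e W (HPQ l) Hd He HW); auto.
    + assert (INR (S Q) * (1/2) <= INR (S Q) * e) by (apply Rmult_le_compat_l; [apply pos_INR|lra]).
      lra.
    + apply two_well_small_d; [lia|lra|generalize (Rmin_r tau (1/10)); lra].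
  - apply Hbound; [apply HPQ|lra|generalize (Rmin_l tau (1/10)); lra|apply HN3; lia|lra].
Qed.

Lemma gibbs_cv_dirac_subseq :
  weak_cv_dirac (fun l => gibbs (Phi (kap l)) (nu (kap l))) (const_seq c).
Proof.
  destruct beta_eventually_nonneg as [L0 HL0].
  apply (weak_cv_dirac_of_small_mass _ c L0); [|apply gibbs_mass_small].
  intros l Hl. split.
  - apply (gibbs_prob H H0 H1 (beta (kap l)) (lam (kap l))); auto.
  - intros f Hf. apply (gibbs_shift H H0 H1 (beta (kap l)) (lam (kap l))); auto.
Qed.
End Subsequence.

Theorem mainTheorem15
  (p q : nat -> nat) (eps beta : nat -> R)
  (H : Sigma -> R) (H0 H1 : nat -> R)
  (Phi : nat -> Sigma -> R) (lam : nat -> R) (nu : nat -> (Sigma -> R) -> R) :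
  (forall k, (0 < p k)%nat) -> (forall k, (0 < q k)%nat) ->
  (forall k, (p k < p (S k))%nat) -> (forall k, (q k < q (S k))%nat) ->
  (forall l, (p (2 * l) < q (2 * l))%nat /\ (q (2 * l) < q (2 * l + 1))%nat /\
             (q (2 * l + 1) < p (2 * l + 1))%nat /\ (p (2 * l + 1) < p (2 * l + 2))%nat) ->
  (forall k, 0 < eps k) -> (forall k, eps (S k) <= eps k) -> Un_cv eps 0 ->
  cv_infty beta ->
  Un_cv (fun k => (INR (p k))^2 * exp (- (beta k * eps k))) 0 ->
  Un_cv (fun k => (INR (q k))^2 * exp (- (beta k * eps k))) 0 ->
  Un_cv (fun k => beta k * eps (S k)) 0 ->
  cv_infty (fun l => INR (q (2 * l)%nat) / INR (p (2 * l)%nat)) ->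
  cv_infty (fun l => INR (p (2 * l + 1)%nat) / INR (q (2 * l + 1)%nat)) ->
  (exists s, infinite_sum (fun k => INR (p k - prev p k) * eps k) s) ->
  (exists s, infinite_sum (fun k => INR (q k - prev q k) * eps k) s) ->
  (forall k n, (prev p k < n <= p k)%nat -> H0 n = eps k) ->
  (forall k n, (prev q k < n <= q k)%nat -> H1 n = eps k) ->
  reduced_double_well H H0 H1 ->
  (forall k, is_eigenfunction H (beta k) (lam k) (Phi k)) ->
  (forall k, is_eigenmeasure H (beta k) (lam k) (nu k)) ->
  weak_cv_dirac (fun l => gibbs (Phi (2 * l)%nat) (nu (2 * l)%nat)) (const_seq false) /\
  weak_cv_dirac (fun l => gibbs (Phi (2 * l + 1)%nat) (nu (2 * l + 1)%nat)) (const_seq true).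
Proof.
  intros Hp Hq Hpi Hqi Hord Heps Hepsd _ Hbeta Hpd Hqd Hfree Hrq Hrp _ _ HH0 HH1 RDW EF EM.
  split.
  - apply (gibbs_cv_dirac_subseq p q eps beta H H0 H1 Phi lam nu (fun l => 2 * l)%nat false);
      auto; try (intros l; lia).
    + intros l. apply Hord.
    + apply (Un_cv_subseq (fun k => INR (q k) ^ 2 * exp (- (beta k * eps k)))); auto. intros l; lia.
    + apply (Un_cv_subseq (fun k => beta k * eps (S k))); auto. intros l; lia.
  - apply (gibbs_cv_dirac_subseq p q eps beta H H0 H1 Phi lam nu (fun l => 2 * l + 1)%nat true);
      auto; try (intros l; lia).
    + intros l. apply Hord.
    + apply (Un_cv_subseq (fun k => INR (p k) ^ 2 * exp (- (beta k * eps k)))); auto. intros l; lia.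
    + apply (Un_cv_subseq (fun k => beta k * eps (S k))); auto. intros l; lia.
Qed.
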